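(* Let $m\ge2$, let $\mathcal H_1,\dots,\mathcal H_m$ be real Hilbert spaces, $\boldsymbol{\mathcal H}=\mathcal H_1\oplus\cdots\oplus\mathcal H_m$, and let $\boldsymbol C\subset\boldsymbol{\mathcal H}$ be nonempty closed convex. For every $i$ let $\boldsymbol g_i:\boldsymbol{\mathcal H}\to\left]-\infty,+\infty\right]$ be such that for every $(x_1,\dots,x_m)$ the function $x\mapsto\boldsymbol g_i(x_1,\dots,x_{i-1},x,x_{i+1},\dots,x_m)$ is real-valued and differentiable on $\mathcal H_i$, with gradient $\nabla_i\boldsymbol g_i(x_1,\dots,x_m)$ at $x_i$, and assume $\sum_i\langle\nabla_i\boldsymbol g_i(\boldsymbol x)-\nabla_i\boldsymbol g_i(\boldsymbol y),x_i-y_i\rangle\ge0$ for all $\boldsymbol x,\boldsymbol y\in\boldsymbol{\mathcal H}$. For $i\in\{1,\dots,m\}$ and $(x_1,\dots,x_m)\in\boldsymbol{\mathcal H}$ set $\boldsymbol Q_i(x_1,\dots,x_{i-1},x_{i+1},\dots,x_m)=\{x\in\mathcal H_i:(x_1,\dots,x_{i-1},x,x_{i+1},\dots,x_m)\in\boldsymbol C\}$. Suppose there exists $(z_1,\dots,z_m)\in\boldsymbol{\mathcal H}$ with $-\big(\nabla_1\boldsymbol g_1(z_1,\dots,z_m),\dots,\nabla_m\boldsymbol g_m(z_1,\dots,z_m)\big)\in N_{\boldsymbol C}(z_1,\dots,z_m)$, and $\chi\in]0,+\infty[$ with $\sum_i\|\nabla_i\boldsymbol g_i(\boldsymbol x)-\nabla_i\boldsymbol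 g_i(\boldsymbol y)\|^2\le\chi^2\sum_i\|x_i-y_i\|^2$ for all $\boldsymbol x,\boldsymbol y$. Let $\varepsilon\in]0,1/(\chi+1)[$, $(\gamma_n)_n$ a sequence in $[\varepsilon,(1-\varepsilon)/\chi]$, $x_{i,0}\in\mathcal H_i$, and $(a_{i,n})_n,(b_{i,n})_n,(c_{i,n})_n$ absolutely summable sequences in $\mathcal H_i$. For every $n$ define $y_{i,n}=x_{i,n}-\gamma_n(\nabla_i\boldsymbol g_i(x_{1,n},\dots,x_{m,n})+a_{i,n})$, $(p_{1,n},\dots,p_{m,n})=P_{\boldsymbol C}(y_{1,n},\dots,y_{m,n})+(b_{1,n},\dots,b_{m,n})$, $q_{i,n}=p_{i,n}-\gamma_n(\nabla_i\boldsymbol g_i(p_{1,n},\dots,p_{m,n})+c_{i,n})$, $x_{i,n+1}=x_{i,n}-y_{i,n}+q_{i,n}$. Then there exists $(\overline x_1,\dots,\overline x_m)$ such that for every $i$, $\overline x_i\in\operatorname{Argmin}_{x\in\boldsymbol Q_i(\overline x_1,\dots,\overline x_{i-1},\overline x_{i+1},\dots,\overline x_m)}\boldsymbol g_i(\overline x_1,\dots,\overline x_{i-1},x,\overline x_{i+1},\dots,\overline x_m)$ (a generalized Nash equilibrium), and $x_{i,n}\rightharpoonup\overline x_i$, $p_{i,n}\rightharpoonup\overline x_i$.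
   Context: $\boldsymbol{\mathcal H}$ carries the inner product $\sum_i\langle x_i,y_i\rangle$. $P_{\boldsymbol C}$ is the metric projection onto $\boldsymbol C$ and $N_{\boldsymbol C}$ its normal cone: $N_{\boldsymbol C}\boldsymbol x=\{\boldsymbol u:\langle\langle\boldsymbol y-\boldsymbol x,\boldsymbol u\rangle\rangle\le0\ \forall\boldsymbol y\in\boldsymbol C\}$ if $\boldsymbol x\in\boldsymbol C$, empty otherwise. $\rightharpoonup$ denotes weak convergence. *)

From Stdlib Require Import Reals Lra Arith.
Open Scope R_scope.

Record Hilbert := {
  carrier :> Type;
  hzero : carrier;
  hadd : carrier -> carrier -> carrier;
  hopp : carrier -> carrier;
  hscal : R -> carrier -> carrier;
  hinner : carrier -> carrier -> R;
  hadd_assoc : forall x y z, hadd x (hadd y z) = hadd (hadd x y) z;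
  hadd_comm : forall x y, hadd x y = hadd y x;
  hadd_0l : forall x, hadd hzero x = x;
  hadd_oppl : forall x, hadd (hopp x) x = hzero;
  hscal_assoc : forall a b x, hscal a (hscal b x) = hscal (a * b) x;
  hscal_1 : forall x, hscal 1 x = x;
  hscal_addr : forall a x y, hscal a (hadd x y) = hadd (hscal a x) (hscal a y);
  hscal_addl : forall a b x, hscal (a + b) x = hadd (hscal a x) (hscal b x);
  hinner_sym : forall x y, hinner x y = hinner y x;
  hinner_addl : forall x y z, hinner (hadd x y) z = hinner x z + hinner y z;
  hinner_scall : forall a x y, hinner (hscal a x) y = a * hinner x y;
  hinner_pos : forall x, 0 <= hinner x x;
  hinner_def : forall x, hinner x x = 0 -> x = hzero;
  hcomplete : forall u : nat -> carrier,
    (forall eps, eps > 0 -> exists N, forall p q, (p >= N)%nat -> (q >= N)%nat ->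
        sqrt (hinner (hadd (u p) (hopp (u q))) (hadd (u p) (hopp (u q)))) < eps) ->
    exists l, forall eps, eps > 0 -> exists N, forall n, (n >= N)%nat ->
        sqrt (hinner (hadd (u n) (hopp l)) (hadd (u n) (hopp l))) < eps
}.

Arguments hzero {h}.
Arguments hadd {h} _ _.
Arguments hopp {h} _.
Arguments hscal {h} _ _.
Arguments hinner {h} _ _.

Definition hsub {H : Hilbert} (x y : H) : H := hadd x (hopp y).
Definition hnorm {H : Hilbert} (x : H) : R := sqrt (hinner x x).

Definition weak_cv {H : Hilbert} (u : nat -> H) (l : H) : Prop :=
  forall v : H, Un_cv (fun n => hinner (u n) v) (hinner l v).

Definition abs_summable {H : Hilbert} (u : nat -> H) : Prop :=
  exists S, Un_cv (fun N => sum_f_R0 (fun n => hnorm (u n)) N) S.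

(** * Finite direct sums H_1 ⊕ ... ⊕ H_m, indices {0,...,m-1} *)
Definition idx (m : nat) := {k : nat | (k < m)%nat}.

Definition idx_eq_dec (m : nat) (i j : idx m) : {i = j} + {i <> j}.
Proof.
  destruct i as [i hi], j as [j hj].
  destruct (Nat.eq_dec i j) as [e|n].
  - left. subst j. f_equal. apply Peano_dec.le_unique.
  - right. intros E. apply n. inversion E. reflexivity.
Defined.

Fixpoint sum_lt (n : nat) (g : nat -> R) : R :=
  match n with O => 0 | S n' => sum_lt n' g + g n' end.

Definition sumI (m : nat) (f : idx m -> R) : R :=
  sum_lt m (fun k => match lt_dec k m with
                     | left h => f (exist _ k h)
                     | right _ => 0 end).

Section Prod.
Context {m : nat} {H : idx m -> Hilbert}.
Definition PH := forall i : idx m, H i.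
Definition padd (x y : PH) : PH := fun i => hadd (x i) (y i).
Definition psub (x y : PH) : PH := fun i => hsub (x i) (y i).
Definition pscal (a : R) (x : PH) : PH := fun i => hscal a (x i).
Definition popp (x : PH) : PH := fun i => hopp (x i).
Definition pinner (x y : PH) : R := sumI m (fun i => hinner (x i) (y i)).
Definition pnorm (x : PH) : R := sqrt (pinner x x).

Definition upd (x : PH) (i : idx m) (y : H i) : PH :=
  fun j => match idx_eq_dec m i j with
           | left e => eq_rect i (fun k => H k) y j e
           | right _ => x j end.

Definition nonempty (C : PH -> Prop) : Prop := exists x, C x.
Definition closed (C : PH -> Prop) : Prop :=
  forall (u : nat -> PH) (l : PH), (forall n, C (u n)) ->
    Un_cv (fun n => pnorm (psub (u n) l)) 0 -> C l.
Definition convex (C : PH -> Prop) : Prop :=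
  forall x y t, C x -> C y -> 0 <= t <= 1 ->
    C (padd (pscal (1 - t) x) (pscal t y)).

Definition is_proj (C : PH -> Prop) (P : PH -> PH) : Prop :=
  forall y, C (P y) /\ forall c, C c -> pnorm (psub y (P y)) <= pnorm (psub y c).

Definition normal_cone (C : PH -> Prop) (x u : PH) : Prop :=
  C x /\ forall y, C y -> pinner (psub y x) u <= 0.

Definition Qset (C : PH -> Prop) (i : idx m) (x : PH) (y : H i) : Prop :=
  C (upd x i y).
End Prod.
Arguments PH {m} H.

From Stdlib Require Import Reals Lra Lia Psatz Classical ClassicalEpsilon
  FunctionalExtensionality Eqdep_dec ZArith.
Open Scope R_scope.

(** Gather the partial gradients into the pseudo-gradient
    B x = (grad_1 x, ..., grad_m x) on the product space H_1 + ... + H_m.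
    The hypotheses say that B is monotone and chi-Lipschitz, and the
    iteration is Tseng's method for the inclusion 0 in B x + N_C x,
    perturbed by summable errors.  An exact Tseng step is Fejer monotone
    with respect to the solutions, with a gain proportional to the squared
    residual; with summable errors this gives quasi-Fejer monotonicity, hence
    bounded iterates, convergent distances to every solution and vanishing
    residuals.  Weak cluster points (they exist by weak sequential
    compactness) are solutions by Minty's lemma, and Opial's argument shows
    that there is only one, so the whole sequence converges weakly.
    Finally, a solution w is a generalized Nash equilibrium: along each
    coordinate line through w, g_i has a nondecreasing derivative
    (monotonicity of B) which is nonnegative at w (first-order condition). *)

Section InnerAlgebra.
Variable X : Hilbert.
Implicit Types x y z : X.

Lemma hadd_0r x : hadd x hzero = x.
Proof. rewrite hadd_comm; apply hadd_0l. Qed.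

Lemma hadd_oppr x : hadd x (hopp x) = hzero.
Proof. rewrite hadd_comm; apply hadd_oppl. Qed.

Lemma hinner_addr x y z : hinner x (hadd y z) = hinner x y + hinner x z.
Proof. rewrite !(hinner_sym _ x); apply hinner_addl. Qed.

Lemma hinner_scalr a x y : hinner x (hscal a y) = a * hinner x y.
Proof. rewrite !(hinner_sym _ x); apply hinner_scall. Qed.

Lemma hinner_0l y : hinner (@hzero X) y = 0.
Proof. pose proof (hinner_addl X hzero hzero y) as E; rewrite hadd_0l in E; lra. Qed.

Lemma hinner_0r y : hinner y (@hzero X) = 0.
Proof. rewrite hinner_sym; apply hinner_0l. Qed.

Lemma hinner_oppl x y : hinner (hopp x) y = - hinner x y.
Proof.
  pose proof (hinner_addl X (hopp x) x y) as E.
  rewrite hadd_oppl, hinner_0l in E; lra.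
Qed.

Lemma hinner_oppr x y : hinner x (hopp y) = - hinner x y.
Proof. rewrite !(hinner_sym _ x); apply hinner_oppl. Qed.

Lemma hilbert_ext x y : (forall t, hinner x t = hinner y t) -> x = y.
Proof.
  intros E.
  assert (Z : hinner (hadd x (hopp y)) (hadd x (hopp y)) = 0).
  { rewrite hinner_addl, hinner_oppl, !E; lra. }
  apply hinner_def in Z.
  rewrite <- (hadd_0l X y), <- Z, <- hadd_assoc, hadd_oppl, hadd_0r; reflexivity.
Qed.
End InnerAlgebra.

Ltac inner_expand := unfold hsub in *;
  repeat rewrite ?hinner_addl, ?hinner_addr, ?hinner_scall, ?hinner_scalr,
    ?hinner_oppl, ?hinner_oppr, ?hinner_0l, ?hinner_0r.

(** Orient the inner products of the given atoms in a fixed way, so that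
    after [inner_expand] the goal becomes a problem of real arithmetic. *)
Ltac inner_orient l :=
  match l with
  | nil => idtac
  | cons ?a ?r =>
      let rec go r := match r with
        | nil => idtac
        | cons ?b ?r' => try rewrite ?(hinner_sym _ b a); go r'
        end in
      go r; inner_orient r
  end.

Section Norm.
Variable X : Hilbert.
Implicit Types x y z : X.

(** The squared distance, in the form used by [hcomplete]. *)
Definition dist_sq x y : R := hinner (hadd x (hopp y)) (hadd x (hopp y)).

Lemma hnorm_nonneg x : 0 <= hnorm x.
Proof. apply sqrt_pos. Qed.

Lemma hnorm_sq x : hnorm x * hnorm x = hinner x x.
Proof. apply sqrt_sqrt, hinner_pos. Qed.

Lemma hnorm_le_of_sq x r : 0 <= r -> hinner x x <= r * r -> hnorm x <= r.
Proof.
  intros Hr Hx. destruct (Rle_dec (hnorm x) r) as [|Hn]; auto.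
  pose proof (hnorm_sq x). nra.
Qed.

Lemma cauchy_schwarz_sq x y : hinner x y * hinner x y <= hinner x x * hinner y y.
Proof.
  destruct (Req_dec (hinner y y) 0) as [E|E].
  - apply hinner_def in E. subst y. rewrite !hinner_0r. nra.
  - pose proof (hinner_pos X y) as Py.
    set (t := - hinner x y / hinner y y).
    pose proof (hinner_pos X (hadd x (hscal t y))) as P.
    revert P; inner_expand; rewrite (hinner_sym _ y x); intro P.
    replace (hinner x x + t * hinner x y + (t * hinner x y + t * (t * hinner y y)))
      with ((hinner x x * hinner y y - hinner x y * hinner x y) / hinner y y) in P
      by (unfold t; field; auto).
    assert (Pos : 0 < hinner y y) by lra.
    apply (Rmult_le_compat_r (hinner y y)) in P; [|lra].
    unfold Rdiv in P. rewrite Rmult_assoc, Rinv_l in P by lra. lra.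
Qed.

Lemma cauchy_schwarz x y : Rabs (hinner x y) <= hnorm x * hnorm y.
Proof.
  apply Rsqr_incr_0_var.
  - rewrite <- Rsqr_abs. unfold Rsqr.
    replace (hnorm x * hnorm y * (hnorm x * hnorm y))
      with ((hnorm x * hnorm x) * (hnorm y * hnorm y)) by ring.
    rewrite !hnorm_sq. apply cauchy_schwarz_sq.
  - apply Rmult_le_pos; apply hnorm_nonneg.
Qed.

Lemma hinner_le_norms x y : hinner x y <= hnorm x * hnorm y.
Proof. eapply Rle_trans; [apply Rle_abs | apply cauchy_schwarz]. Qed.

Lemma hinner_ge_norms x y : - (hnorm x * hnorm y) <= hinner x y.
Proof.
  pose proof (cauchy_schwarz x y). pose proof (Rle_abs (- hinner x y)).
  rewrite Rabs_Ropp in *. lra.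
Qed.

Lemma hnorm_triangle x y : hnorm (hadd x y) <= hnorm x + hnorm y.
Proof.
  pose proof (hnorm_nonneg x); pose proof (hnorm_nonneg y).
  apply hnorm_le_of_sq; [lra|].
  inner_expand. rewrite (hinner_sym _ y x).
  pose proof (hinner_le_norms x y). rewrite <- (hnorm_sq x), <- (hnorm_sq y). nra.
Qed.

Lemma hnorm_sub_triangle x y z : hnorm (hsub x z) <= hnorm (hsub x y) + hnorm (hsub y z).
Proof.
  replace (hsub x z) with (hadd (hsub x y) (hsub y z)); [apply hnorm_triangle|].
  apply hilbert_ext; intro t; inner_expand; ring.
Qed.

Lemma hnorm_opp x : hnorm (hopp x) = hnorm x.
Proof. unfold hnorm; f_equal; inner_expand; ring. Qed.

Lemma hnorm_scal a x : hnorm (hscal a x) = Rabs a * hnorm x.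
Proof.
  unfold hnorm. inner_expand.
  replace (a * (a * hinner x x)) with (Rsqr (Rabs a) * hinner x x)
    by (rewrite <- Rsqr_abs; unfold Rsqr; ring).
  rewrite sqrt_mult, sqrt_Rsqr; auto using Rabs_pos, Rle_0_sqr, hinner_pos.
Qed.

Lemma hnorm_sub_sym x y : hnorm (hsub x y) = hnorm (hsub y x).
Proof. unfold hnorm; f_equal; inner_expand; ring. Qed.

Lemma hnorm_sub_ge x y : hnorm x - hnorm y <= hnorm (hsub x y).
Proof.
  pose proof (hnorm_sub_triangle x y hzero) as T.
  replace (hsub x hzero) with x in T by (apply hilbert_ext; intro; inner_expand; ring).
  replace (hsub y hzero) with y in T by (apply hilbert_ext; intro; inner_expand; ring).
  lra.
Qed.

Lemma hsub_diag x : hsub x x = hzero.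
Proof. apply hadd_oppr. Qed.

Lemma hsub_eq0 x y : hinner (hsub x y) (hsub x y) = 0 -> x = y.
Proof.
  intros E. apply hinner_def in E. apply hilbert_ext; intro t.
  assert (E2 : hinner (hsub x y) t = 0) by (rewrite E; apply hinner_0l).
  revert E2; inner_expand; lra.
Qed.
End Norm.

Lemma sum_lt_ext n f g : (forall k, (k < n)%nat -> f k = g k) -> sum_lt n f = sum_lt n g.
Proof. induction n; simpl; intros E; auto. rewrite IHn, E; auto. Qed.

Lemma sum_lt_plus n f g : sum_lt n (fun k => f k + g k) = sum_lt n f + sum_lt n g.
Proof. induction n; simpl; [ring | rewrite IHn; ring]. Qed.

Lemma sum_lt_scal n a f : sum_lt n (fun k => a * f k) = a * sum_lt n f.
Proof. induction n; simpl; [ring | rewrite IHn; ring]. Qed.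

Lemma sum_lt_le n f g : (forall k, (k < n)%nat -> f k <= g k) -> sum_lt n f <= sum_lt n g.
Proof.
  induction n; simpl; intros E; [lra|].
  assert (f n <= g n) by auto. assert (sum_lt n f <= sum_lt n g) by auto. lra.
Qed.

Lemma sum_lt_const n c : sum_lt n (fun _ => c) = INR n * c.
Proof. induction n; simpl sum_lt; [simpl; ring | rewrite IHn, S_INR; ring]. Qed.

Lemma sum_lt_nonneg n f : (forall k, (k < n)%nat -> 0 <= f k) -> 0 <= sum_lt n f.
Proof.
  intros Hf. replace 0 with (INR n * 0) by ring. rewrite <- sum_lt_const.
  apply sum_lt_le; auto.
Qed.

Lemma sum_lt_term_le n f k :
  (forall k, (k < n)%nat -> 0 <= f k) -> (k < n)%nat -> f k <= sum_lt n f.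
Proof.
  induction n; simpl; intros Hf Hk; [lia|].
  assert (0 <= sum_lt n f) by (apply sum_lt_nonneg; auto).
  destruct (Nat.eq_dec k n) as [->|Hne]; [lra|].
  assert (f k <= sum_lt n f) by (apply IHn; auto; lia).
  assert (0 <= f n) by auto. lra.
Qed.

Lemma sum_lt_sq_le n t :
  (forall k, 0 <= t k) -> sum_lt n (fun k => t k * t k) <= sum_lt n t * sum_lt n t.
Proof.
  intros Ht. induction n; simpl; [lra|].
  assert (0 <= sum_lt n t) by (apply sum_lt_nonneg; auto). specialize (Ht n). nra.
Qed.

Section SumI.
Variable m : nat.

Definition idx_fun (f : idx m -> R) (k : nat) : R :=
  match lt_dec k m with left h => f (exist _ k h) | right _ => 0 end.

Lemma sumI_ext f g : (forall i, f i = g i) -> sumI m f = sumI m g.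
Proof. intros E. apply sum_lt_ext; intros k _. destruct (lt_dec k m); auto. Qed.

Lemma sumI_plus f g : sumI m (fun i => f i + g i) = sumI m f + sumI m g.
Proof.
  unfold sumI. rewrite <- sum_lt_plus. apply sum_lt_ext; intros k _.
  destruct (lt_dec k m); auto; ring.
Qed.

Lemma sumI_scal a f : sumI m (fun i => a * f i) = a * sumI m f.
Proof.
  unfold sumI. rewrite <- sum_lt_scal. apply sum_lt_ext; intros k _.
  destruct (lt_dec k m); auto; ring.
Qed.

Lemma sumI_le f g : (forall i, f i <= g i) -> sumI m f <= sumI m g.
Proof. intros E. apply sum_lt_le; intros k _. destruct (lt_dec k m); auto; lra. Qed.

Lemma sumI_nonneg f : (forall i, 0 <= f i) -> 0 <= sumI m f.
Proof. intros E. apply sum_lt_nonneg; intros k _. destruct (lt_dec k m); auto; lra. Qed.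

Lemma sumI_const c : sumI m (fun _ => c) = INR m * c.
Proof.
  unfold sumI. rewrite <- sum_lt_const. apply sum_lt_ext; intros k Hk.
  destruct (lt_dec k m); auto; lia.
Qed.

Lemma sumI_term_le f i : (forall i, 0 <= f i) -> f i <= sumI m f.
Proof.
  intros Hf. destruct i as [k hk].
  replace (f (exist _ k hk)) with (idx_fun f k).
  - apply sum_lt_term_le; auto. intros j _. unfold idx_fun.
    destruct (lt_dec j m); auto; lra.
  - unfold idx_fun. destruct (lt_dec k m) as [h|]; [|lia].
    do 2 f_equal. apply Peano_dec.le_unique.
Qed.

Lemma sumI_zero f : (forall i, 0 <= f i) -> sumI m f = 0 -> forall i, f i = 0.
Proof. intros Hf E i. pose proof (sumI_term_le f i Hf). pose proof (Hf i). lra. Qed.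

Lemma sumI_single f i : (forall j, j <> i -> f j = 0) -> sumI m f = f i.
Proof.
  intros Hf. destruct i as [k hk].
  assert (Partial : forall n, sum_lt n (idx_fun f) =
                              if lt_dec k n then f (exist _ k hk) else 0).
  { induction n; simpl; [destruct (lt_dec k 0); [lia | auto]|].
    rewrite IHn. unfold idx_fun.
    destruct (lt_dec k n), (lt_dec k (S n)), (lt_dec n m) as [hn|]; try lia.
    - rewrite (Hf (exist _ n hn)); [ring|]. intro E. inversion E. lia.
    - ring.
    - assert (n = k) by lia. subst n.
      replace hn with hk by apply Peano_dec.le_unique. ring.
    - rewrite (Hf (exist _ n hn)); [ring|]. intro E. inversion E. lia. }
  unfold sumI. fold (idx_fun f). rewrite Partial. destruct (lt_dec k m); [auto | lia].
Qed.

Lemma eventually_all_idx (P : idx m -> nat -> Prop) :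
  (forall i, exists N, forall n, (n >= N)%nat -> P i n) ->
  exists N, forall i n, (n >= N)%nat -> P i n.
Proof.
  intros HP.
  assert (Below : forall k, exists N, forall i n,
             (proj1_sig i < k)%nat -> (n >= N)%nat -> P i n).
  { induction k as [|k [N1 HN1]]; [exists O; intros; lia|].
    destruct (lt_dec k m) as [h|h].
    - destruct (HP (exist _ k h)) as [N2 HN2]. exists (max N1 N2).
      intros [j hj] n Hj Hn. simpl in Hj. destruct (Nat.eq_dec j k).
      + subst. replace hj with h by apply Peano_dec.le_unique. apply HN2. lia.
      + apply HN1; simpl; lia.
    - exists N1. intros [j hj] n Hj Hn. apply HN1; simpl; lia. }
  destruct (Below m) as [N HN]. exists N. intros [j hj] n Hn. apply HN; auto.
Qed.
End SumI.

Section ProductSpace.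
Variable m : nat.
Variable H : idx m -> Hilbert.

Lemma product_complete : forall u : nat -> PH H,
  (forall eps, eps > 0 -> exists N, forall p q, (p >= N)%nat -> (q >= N)%nat ->
     sqrt (pinner (padd (u p) (popp (u q))) (padd (u p) (popp (u q)))) < eps) ->
  exists l, forall eps, eps > 0 -> exists N, forall n, (n >= N)%nat ->
     sqrt (pinner (padd (u n) (popp l)) (padd (u n) (popp l))) < eps.
Proof.
  intros u Hc.
  assert (Lim : forall i, {l : H i | forall eps, eps > 0 -> exists N, forall n,
             (n >= N)%nat -> sqrt (dist_sq (H i) (u n i) l) < eps}).
  { intros i. apply constructive_indefinite_description, hcomplete.
    intros eps He. destruct (Hc eps He) as [N HN]. exists N. intros p q Hp Hq.
    eapply Rle_lt_trans; [|apply (HN p q Hp Hq)]. apply sqrt_le_1_alt.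
    apply (sumI_term_le m (fun i => hinner (padd (u p) (popp (u q)) i)
                                            (padd (u p) (popp (u q)) i))).
    intros; apply hinner_pos. }
  exists (fun i => proj1_sig (Lim i)). intros eps He.
  pose proof (pos_INR m) as Hm0.
  set (eta := eps / (INR m + 1)).
  assert (Heta : eta > 0) by (unfold eta; apply Rdiv_lt_0_compat; lra).
  destruct (eventually_all_idx m
              (fun i n => sqrt (dist_sq (H i) (u n i) (proj1_sig (Lim i))) < eta))
    as [N HN].
  { intros i. apply (proj2_sig (Lim i)). auto. }
  exists N. intros n Hn.
  (* the squared distance is at most m * eta^2 < eps^2 *)
  assert (Sum : pinner (padd (u n) (popp (fun i => proj1_sig (Lim i))))
                       (padd (u n) (popp (fun i => proj1_sig (Lim i))))
                <= INR m * (eta * eta)).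
  { unfold pinner. rewrite <- sumI_const. apply sumI_le. intros i.
    pose proof (HN i n Hn) as Hs. unfold dist_sq in Hs. unfold padd, popp.
    set (t := hinner _ _) in *.
    assert (0 <= t) by apply hinner_pos. pose proof (sqrt_sqrt t ltac:(lra)).
    pose proof (sqrt_pos t). nra. }
  assert (Small : INR m * (eta * eta) < eps * eps).
  { replace (INR m * (eta * eta))
      with (eps * eps * (INR m / ((INR m + 1) * (INR m + 1)))) by (unfold eta; field; lra).
    assert (INR m / ((INR m + 1) * (INR m + 1)) < 1).
    { apply (Rmult_lt_reg_r ((INR m + 1) * (INR m + 1))); [nra|].
      unfold Rdiv. rewrite Rmult_assoc, Rinv_l by nra. nra. }
    assert (0 < eps * eps) by nra. nra. }
  rewrite <- (sqrt_square eps) by lra. apply sqrt_lt_1_alt. split; [|lra].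
  unfold pinner; apply sumI_nonneg; intros; apply hinner_pos.
Qed.

Definition PX : Hilbert.
Proof.
  refine {| carrier := PH H; hzero := fun i => hzero; hadd := padd; hopp := popp;
            hscal := pscal; hinner := pinner; hcomplete := product_complete |}.
  1-8: intros; apply functional_extensionality_dep; intro i.
  - apply hadd_assoc.
  - apply hadd_comm.
  - apply hadd_0l.
  - apply hadd_oppl.
  - apply hscal_assoc.
  - apply hscal_1.
  - apply hscal_addr.
  - apply hscal_addl.
  - intros; apply sumI_ext; intro i; apply hinner_sym.
  - intros; unfold pinner; rewrite <- sumI_plus; apply sumI_ext; intro i; apply hinner_addl.
  - intros; unfold pinner; rewrite <- sumI_scal; apply sumI_ext; intro i; apply hinner_scall.
  - intros; apply sumI_nonneg; intro i; apply hinner_pos.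
  - intros x Hx; apply functional_extensionality_dep; intro i. apply hinner_def.
    apply (sumI_zero m (fun i => hinner (x i) (x i))); auto. intros; apply hinner_pos.
Defined.

Lemma upd_same (x : PH H) i v : upd x i v i = v.
Proof.
  unfold upd. destruct (idx_eq_dec m i i) as [e|n]; [|contradiction].
  rewrite (UIP_dec (idx_eq_dec m) e eq_refl). reflexivity.
Qed.

Lemma upd_other (x : PH H) i v j : i <> j -> upd x i v j = x j.
Proof. intros. unfold upd. destruct (idx_eq_dec m i j); [contradiction | auto]. Qed.

Lemma upd_upd (x : PH H) i u v : upd (upd x i u) i v = upd x i v.
Proof.
  apply functional_extensionality_dep; intro j. unfold upd.
  destruct (idx_eq_dec m i j); auto.
Qed.

Lemma upd_id (x : PH H) i : upd x i (x i) = x.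
Proof.
  apply functional_extensionality_dep; intro j. unfold upd.
  destruct (idx_eq_dec m i j) as [e|]; auto. subst j. reflexivity.
Qed.

Lemma pinner_single (u v : PX) i :
  (forall j, j <> i -> v j = hzero) -> hinner u v = hinner (u i) (v i).
Proof.
  intros Hv. apply (sumI_single m (fun j => hinner (u j) (v j))).
  intros j Hj. rewrite Hv; auto. apply hinner_0r.
Qed.

Lemma weak_cv_component (u : nat -> PX) (w : PX) i :
  weak_cv u w -> weak_cv (fun n => u n i) (w i).
Proof.
  intros Hw vi. set (V := (upd (fun j => hzero) i vi : PX)).
  assert (HV : forall j, j <> i -> V j = hzero) by (intros; unfold V; rewrite upd_other; auto).
  assert (Vi : V i = vi) by apply upd_same.
  specialize (Hw V). rewrite (pinner_single w V i HV), Vi in Hw.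
  eapply Un_cv_ext; [|exact Hw]. intros n. cbv beta.
  rewrite (pinner_single (u n) V i HV), Vi. reflexivity.
Qed.

Lemma hnorm_le_sum_components (v : PX) : hnorm v <= sumI m (fun i => hnorm (v i)).
Proof.
  apply hnorm_le_of_sq; [apply sumI_nonneg; intros; apply hnorm_nonneg|].
  eapply Rle_trans; [|apply sum_lt_sq_le].
  - right. apply sum_lt_ext. intros k _. destruct (lt_dec k m); [|ring].
    rewrite hnorm_sq. reflexivity.
  - intros k. destruct (lt_dec k m); [apply hnorm_nonneg | lra].
Qed.
Lemma product_hnorm_sq (v : PX) :
  hnorm v ^ 2 = sumI m (fun i => hnorm (v i) ^ 2).
Proof.
  replace (hnorm v ^ 2) with (hnorm v * hnorm v) by ring. rewrite hnorm_sq.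
  apply sumI_ext. intros i. rewrite <- hnorm_sq. ring.
Qed.

Lemma product_lipschitz (F : PX -> PX) chi :
  0 < chi ->
  (forall x y, sumI m (fun i => hnorm (hsub (F x i) (F y i)) ^ 2)
               <= chi ^ 2 * sumI m (fun i => hnorm (hsub (x i) (y i)) ^ 2)) ->
  forall x y, hnorm (hsub (F x) (F y)) <= chi * hnorm (hsub x y).
Proof.
  intros Hchi HL x y. pose proof (hnorm_nonneg _ (hsub x y)).
  apply hnorm_le_of_sq; [nra|]. rewrite <- hnorm_sq.
  assert (E1 : hnorm (hsub (F x) (F y)) ^ 2 = sumI m (fun i => hnorm (hsub (F x i) (F y i)) ^ 2))
    by exact (product_hnorm_sq (hsub (F x) (F y))).
  assert (E2 : hnorm (hsub x y) ^ 2 = sumI m (fun i => hnorm (hsub (x i) (y i)) ^ 2))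
    by exact (product_hnorm_sq (hsub x y)).
  pose proof (HL x y). nra.
Qed.
End ProductSpace.

(** Strictly increasing maps [nat -> nat], i.e. extractions of subsequences. *)
Definition inc (f : nat -> nat) : Prop := forall n, (f n < f (S n))%nat.

Lemma inc_lt f : inc f -> forall a b, (a < b)%nat -> (f a < f b)%nat.
Proof. intros Hf a b Hab. induction Hab; [apply Hf|]. specialize (Hf m). lia. Qed.

Lemma inc_ge f : inc f -> forall n, (n <= f n)%nat.
Proof. intros Hf n. induction n; [lia|]. specialize (Hf n). lia. Qed.

Lemma inc_comp f g : inc f -> inc g -> inc (fun n => f (g n)).
Proof. intros Hf Hg n. apply inc_lt; auto. Qed.

Lemma Un_cv_const c : Un_cv (fun _ => c) c.
Proof. intros e He. exists O. intros. unfold R_dist. rewrite Rminus_diag, Rabs_R0. lra. Qed.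

Lemma Un_cv_scal s l a : Un_cv s l -> Un_cv (fun n => a * s n) (a * l).
Proof. intros. apply CV_mult; auto. apply Un_cv_const. Qed.

(** A sequence whose late terms are late terms of a convergent sequence
    converges to the same limit; this covers subsequences and shifts. *)
Lemma Un_cv_tail s t l N0 :
  Un_cv s l -> (forall n, (n >= N0)%nat -> exists k, (k >= n)%nat /\ t n = s k) ->
  Un_cv t l.
Proof.
  intros Hs Ht e He. destruct (Hs e He) as [N HN]. exists (max N N0). intros n Hn.
  destruct (Ht n) as [k [Hk ->]]; [lia|]. apply HN. lia.
Qed.

Lemma Un_cv_sub s l f : Un_cv s l -> inc f -> Un_cv (fun n => s (f n)) l.
Proof.
  intros Hs Hf. apply (Un_cv_tail s _ l O Hs). intros n _.
  exists (f n). split; auto. apply inc_ge; auto.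
Qed.

Lemma Un_cv_succ s l : Un_cv s l -> Un_cv (fun n => s (S n)) l.
Proof. intros Hs. apply (Un_cv_tail s _ l O Hs). intros n _. exists (S n); split; auto. Qed.

Lemma Un_cv_of_succ s l : Un_cv (fun n => s (S n)) l -> Un_cv s l.
Proof.
  intros Hs e He. destruct (Hs e He) as [N HN]. exists (S N). intros [|n] Hn; [lia|].
  apply HN. lia.
Qed.

Lemma lim_le_eventually s l B N :
  Un_cv s l -> (forall n, (n >= N)%nat -> s n <= B) -> l <= B.
Proof.
  intros Hs HB. destruct (Rle_dec l B) as [|Hn]; auto. exfalso.
  destruct (Hs (l - B)) as [N1 HN]; [lra|].
  specialize (HN (max N N1) ltac:(lia)). specialize (HB (max N N1) ltac:(lia)).
  unfold R_dist in HN. apply Rabs_def2 in HN. lra.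
Qed.

Lemma lim_ge_eventually s l B N :
  Un_cv s l -> (forall n, (n >= N)%nat -> B <= s n) -> B <= l.
Proof.
  intros Hs HB. assert (- l <= - B); [|lra].
  apply (lim_le_eventually (fun n => - s n) _ _ N); [apply CV_opp; auto|].
  intros n Hn. specialize (HB n Hn). lra.
Qed.

Lemma squeeze0 s t : (forall n, 0 <= s n <= t n) -> Un_cv t 0 -> Un_cv s 0.
Proof.
  intros H Ht e He. destruct (Ht e He) as [N HN]. exists N. intros n Hn.
  specialize (HN n Hn). specialize (H n). unfold R_dist in *. rewrite Rminus_0_r in *.
  rewrite Rabs_right in * by lra. lra.
Qed.

Lemma Un_cv_close (u v e : nat -> R) l :
  Un_cv u l -> Un_cv e 0 -> (forall n, Rabs (v n - u n) <= e n) -> Un_cv v l.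
Proof.
  intros Hu He Hv ep Hep.
  destruct (Hu (ep / 2)) as [N1 H1]; [lra|]. destruct (He (ep / 2)) as [N2 H2]; [lra|].
  exists (max N1 N2). intros n Hn.
  specialize (H1 n ltac:(lia)). specialize (H2 n ltac:(lia)). specialize (Hv n).
  unfold R_dist in *. rewrite Rminus_0_r in H2. pose proof (Rle_abs (e n)).
  replace (v n - l) with ((v n - u n) + (u n - l)) by ring.
  eapply Rle_lt_trans; [apply Rabs_triang | lra].
Qed.

Lemma sq_cv0 d : (forall n, 0 <= d n) -> Un_cv (fun n => d n * d n) 0 -> Un_cv d 0.
Proof.
  intros Hd H e He. destruct (H (e * e)) as [N HN]; [nra|]. exists N. intros n Hn.
  specialize (HN n Hn). specialize (Hd n). unfold R_dist in *. rewrite !Rminus_0_r in *.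
  rewrite Rabs_right in HN by nra. rewrite Rabs_right by nra. nra.
Qed.

Lemma cv_bounded s l : Un_cv s l -> exists K, forall n, s n <= K.
Proof.
  intros H. destruct (H 1) as [N HN]; [lra|].
  exists (Rabs l + 1 + sum_lt N (fun k => Rabs (s k))). intros n.
  assert (0 <= sum_lt N (fun k => Rabs (s k))) by (apply sum_lt_nonneg; intros; apply Rabs_pos).
  destruct (le_lt_dec N n) as [Hn|Hn].
  - specialize (HN n Hn). unfold R_dist in HN.
    pose proof (Rle_abs (s n - l)). pose proof (Rle_abs l). lra.
  - pose proof (sum_lt_term_le N (fun k => Rabs (s k)) n (fun k _ => Rabs_pos (s k)) Hn).
    pose proof (Rle_abs (s n)). pose proof (Rabs_pos l). lra.
Qed.

Lemma not_cv_sub s l : ~ Un_cv s l ->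
  exists eta, eta > 0 /\ exists psi, inc psi /\ forall n, eta <= Rabs (s (psi n) - l).
Proof.
  intros Hn. apply NNPP. intros Hc. apply Hn. intros e He. apply NNPP. intros HN.
  assert (Far : forall N, exists n, (n >= N)%nat /\ e <= Rabs (s n - l)).
  { intros N. apply NNPP. intros H2. apply HN. exists N. intros n Hn'. unfold R_dist.
    destruct (Rlt_le_dec (Rabs (s n - l)) e); auto. exfalso. apply H2. exists n; auto. }
  destruct (choice _ Far) as [pk Hpk].
  set (psi := fix psi n := match n with O => pk O | S n' => pk (S (psi n')) end).
  apply Hc. exists e. split; auto. exists psi. split.
  - intros n. simpl. destruct (Hpk (S (psi n))). lia.
  - intros [|n]; simpl; apply Hpk.
Qed.

Lemma inv_small eta : eta > 0 -> exists N, forall n, (n >= N)%nat -> / (INR n + 1) < eta.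
Proof.
  intros He. destruct (archimed (/ eta)) as [H1 _].
  assert (0 < / eta) by (apply Rinv_0_lt_compat; lra).
  exists (Z.to_nat (up (/ eta))). intros n Hn.
  assert (INR (Z.to_nat (up (/ eta))) = IZR (up (/ eta))).
  { rewrite INR_IZR_INZ. f_equal. apply Z2Nat.id. apply le_IZR. lra. }
  apply le_INR in Hn.
  apply (Rmult_lt_reg_l (INR n + 1)); [lra|]. rewrite Rinv_r by lra.
  apply (Rmult_lt_reg_l (/ eta)); auto. rewrite Rmult_1_r.
  replace (/ eta * ((INR n + 1) * eta)) with (INR n + 1) by (field; lra). lra.
Qed.

Lemma nonpos_of_small_multiples a b :
  0 <= b -> (forall t, 0 < t <= 1 -> 2 * a <= t * b) -> a <= 0.
Proof.
  intros Hb H. destruct (Rle_dec a 0) as [|Hn]; auto. exfalso.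
  specialize (H (a / (a + b))).
  assert (Ht : 0 < a / (a + b) <= 1).
  { split; [apply Rdiv_lt_0_compat; lra|].
    apply (Rmult_le_reg_r (a + b)); [lra|].
    unfold Rdiv. rewrite Rmult_assoc, Rinv_l by lra. lra. }
  specialize (H Ht).
  assert (a / (a + b) * b <= a).
  { apply (Rmult_le_reg_r (a + b)); [lra|].
    replace (a / (a + b) * b * (a + b)) with (a * b) by (field; lra). nra. }
  lra.
Qed.

Lemma nonneg_of_small_multiples a K : (forall t, 0 < t <= 1 -> - (t * K) <= a) -> 0 <= a.
Proof.
  intros Ht. destruct (Rle_dec 0 a) as [|Hn]; auto. exfalso.
  destruct (Rle_dec K 0); [specialize (Ht 1 ltac:(lra)); lra|].
  set (t := Rmin 1 (- a / (2 * K))).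
  assert (0 < - a / (2 * K)) by (apply Rdiv_lt_0_compat; lra).
  assert (Ht1 : 0 < t <= 1) by (unfold t; split; [apply Rmin_glb_lt; lra | apply Rmin_l]).
  specialize (Ht t Ht1).
  assert (t <= - a / (2 * K)) by apply Rmin_r.
  assert (A : t * K <= - a / (2 * K) * K) by (apply Rmult_le_compat_r; lra).
  replace (- a / (2 * K) * K) with (- a / 2) in A by (field; lra). lra.
Qed.

(** Projection onto a nonempty closed convex subset of a Hilbert space. *)
Section Projection.
Variable X : Hilbert.
Implicit Types x y z v c : X.

Definition hclosed (M : X -> Prop) : Prop :=
  forall (u : nat -> X) l, (forall n, M (u n)) ->
    Un_cv (fun n => hnorm (hsub (u n) l)) 0 -> M l.

Definition hconvex (M : X -> Prop) : Prop :=
  forall x y t, M x -> M y -> 0 <= t <= 1 -> M (hadd (hscal (1 - t) x) (hscal t y)).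

Lemma nearest_point_variational M v p :
  hconvex M -> M p -> (forall c, M c -> hnorm (hsub v p) <= hnorm (hsub v c)) ->
  forall c, M c -> hinner (hsub v p) (hsub c p) <= 0.
Proof.
  intros Hcv Hp Hmin c Hc.
  apply (nonpos_of_small_multiples _ (hinner (hsub c p) (hsub c p))); [apply hinner_pos|].
  intros t Ht.
  specialize (Hmin _ (Hcv p c t Hp Hc ltac:(lra))).
  assert (Hsq : hinner (hsub v p) (hsub v p) <=
      hinner (hsub v (hadd (hscal (1 - t) p) (hscal t c)))
             (hsub v (hadd (hscal (1 - t) p) (hscal t c)))).
  { rewrite <- !hnorm_sq. pose proof (hnorm_nonneg X (hsub v p)). nra. }
  revert Hsq. inner_expand. inner_orient (cons v (cons p (cons c nil))). nra.
Qed.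

(** Parallelogram estimate: two almost-nearest points of a convex set are close. *)
Lemma almost_nearest_close M v d c1 c2 e1 e2 :
  hconvex M -> (forall c, M c -> d <= hnorm (hsub v c)) -> 0 <= d ->
  M c1 -> M c2 -> 0 <= e1 <= 1 -> 0 <= e2 <= 1 ->
  hnorm (hsub v c1) < d + e1 -> hnorm (hsub v c2) < d + e2 ->
  hinner (hsub c1 c2) (hsub c1 c2) <= 2 * (2 * d + 1) * (e1 + e2).
Proof.
  intros Hcv Hd Hd0 M1 M2 He1 He2 N1 N2.
  pose proof (Hd _ (Hcv c1 c2 (1 / 2) M1 M2 ltac:(lra))) as Mid.
  assert (E1 : hinner (hsub v c1) (hsub v c1) <= d * d + (2 * d + 1) * e1).
  { rewrite <- hnorm_sq. pose proof (hnorm_nonneg X (hsub v c1)). nra. }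
  assert (E2 : hinner (hsub v c2) (hsub v c2) <= d * d + (2 * d + 1) * e2).
  { rewrite <- hnorm_sq. pose proof (hnorm_nonneg X (hsub v c2)). nra. }
  assert (EM : d * d <= hinner (hsub v (hadd (hscal (1 - 1 / 2) c1) (hscal (1 / 2) c2)))
                              (hsub v (hadd (hscal (1 - 1 / 2) c1) (hscal (1 / 2) c2)))).
  { rewrite <- hnorm_sq. nra. }
  revert E1 E2 EM. inner_expand. inner_orient (cons v (cons c1 (cons c2 nil))). nra.
Qed.

Lemma distance_infimum M v : (exists c, M c) ->
  exists d, 0 <= d /\ (forall c, M c -> d <= hnorm (hsub v c)) /\
            forall e, e > 0 -> exists c, M c /\ hnorm (hsub v c) < d + e.
Proof.
  intros [c0 Hc0].
  (* d = - sup { - |v - c| : c in M } *)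
  set (E := fun r => exists c, M c /\ r = - hnorm (hsub v c)).
  destruct (completeness E) as [s [Hs1 Hs2]].
  { exists 0. intros r [c [_ ->]]. pose proof (hnorm_nonneg X (hsub v c)). lra. }
  { exists (- hnorm (hsub v c0)), c0; auto. }
  exists (- s). split; [|split].
  - assert (s <= 0); [|lra]. apply Hs2. intros r [c [_ ->]].
    pose proof (hnorm_nonneg X (hsub v c)). lra.
  - intros c Hc. assert (- hnorm (hsub v c) <= s) by (apply Hs1; exists c; auto). lra.
  - intros e He. apply NNPP. intros Hn.
    assert (s <= s - e); [|lra].
    apply Hs2. intros r [c [Hc ->]].
    destruct (Rle_dec (- hnorm (hsub v c)) (s - e)) as [|Hr]; auto.
    exfalso. apply Hn. exists c. split; auto. lra.
Qed.

(** Existence of a nearest point: a minimizing sequence is Cauchy, and its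
    limit stays in the closed set. *)
Lemma nearest_point_exists M v : (exists c, M c) -> hclosed M -> hconvex M ->
  exists p, M p /\ forall c, M c -> hnorm (hsub v p) <= hnorm (hsub v c).
Proof.
  intros Hne Hcl Hcv.
  destruct (distance_infimum M v Hne) as [d [Hd0 [Hd1 Hd2]]].
  assert (Hinv : forall n, 0 < / (INR n + 1) <= 1).
  { intros n. pose proof (pos_INR n). split; [apply Rinv_0_lt_compat; lra|].
    rewrite <- Rinv_1. apply Rinv_le_contravar; lra. }
  destruct (choice (fun n c => M c /\ hnorm (hsub v c) < d + / (INR n + 1))) as [cs Hcs].
  { intros n. apply Hd2, Hinv. }
  assert (Cauchy : forall eps, eps > 0 -> exists N, forall p q, (p >= N)%nat -> (q >= N)%nat ->
             sqrt (dist_sq X (cs p) (cs q)) < eps).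
  { intros eps He. destruct (inv_small (eps * eps / (4 * (2 * d + 1)))) as [N HN].
    { apply Rdiv_lt_0_compat; nra. }
    exists N. intros p q Hp Hq.
    rewrite <- (sqrt_square eps) by lra. apply sqrt_lt_1_alt. split; [apply hinner_pos|].
    destruct (Hcs p), (Hcs q). pose proof (Hinv p); pose proof (Hinv q).
    eapply Rle_lt_trans;
      [apply (almost_nearest_close M v d (cs p) (cs q) (/ (INR p + 1)) (/ (INR q + 1))
                Hcv Hd1 Hd0); auto; lra|].
    pose proof (HN p Hp); pose proof (HN q Hq).
    apply Rlt_le_trans with
      (2 * (2 * d + 1) * (eps * eps / (4 * (2 * d + 1)) + eps * eps / (4 * (2 * d + 1)))).
    - apply Rmult_lt_compat_l; lra.
    - right; field; lra. }
  destruct (hcomplete X cs Cauchy) as [l Hl].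
  assert (Hcv_l : Un_cv (fun n => hnorm (hsub (cs n) l)) 0).
  { intros e He. destruct (Hl e He) as [N HN]. exists N. intros n Hn. unfold R_dist.
    rewrite Rminus_0_r, Rabs_right by (apply Rle_ge, hnorm_nonneg). apply HN; auto. }
  exists l. split; [apply (Hcl cs l); auto; intro n; apply Hcs|].
  intros c Hc. apply Rle_trans with d; auto.
  destruct (Rle_dec (hnorm (hsub v l)) d) as [|Hn]; auto. exfalso.
  set (e := (hnorm (hsub v l) - d) / 2).
  destruct (inv_small e) as [N1 HN1]; [unfold e; lra|].
  destruct (Hcv_l e) as [N2 HN2]; [unfold e; lra|].
  specialize (HN1 (max N1 N2) ltac:(lia)). specialize (HN2 (max N1 N2) ltac:(lia)).
  unfold R_dist in HN2. rewrite Rminus_0_r, Rabs_right in HN2 by (apply Rle_ge, hnorm_nonneg).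
  pose proof (proj2 (Hcs (max N1 N2))). pose proof (hnorm_sub_triangle X v (cs (max N1 N2)) l).
  unfold e in *. lra.
Qed.

Lemma projection_variational M v : (exists c, M c) -> hclosed M -> hconvex M ->
  exists p, M p /\ forall c, M c -> hinner (hsub v p) (hsub c p) <= 0.
Proof.
  intros Hne Hcl Hcv. destruct (nearest_point_exists M v Hne Hcl Hcv) as [p [Mp Hp]].
  exists p; split; auto. apply nearest_point_variational; auto.
Qed.

Lemma subspace_orthogonal (M : X -> Prop) v p :
  (forall x y, M x -> M y -> M (hadd x y)) -> (forall a x, M x -> M (hscal a x)) ->
  M p -> (forall c, M c -> hinner (hsub v p) (hsub c p) <= 0) ->
  forall c, M c -> hinner (hsub v p) c = 0.
Proof.
  intros Hadd Hsc Mp HVI c Mc.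
  pose proof (HVI _ (Hadd _ _ Mp Mc)) as H1.
  pose proof (HVI _ (Hadd _ _ Mp (Hsc (-1) _ Mc))) as H2.
  revert H1 H2. inner_expand. lra.
Qed.

Lemma subspace_convex (M : X -> Prop) :
  (forall x y, M x -> M y -> M (hadd x y)) -> (forall a x, M x -> M (hscal a x)) ->
  hconvex M.
Proof. intros Hadd Hsc x y t Mx My _. apply Hadd; apply Hsc; auto. Qed.

Lemma orthogonal_decomposition (M : X -> Prop) v :
  M hzero -> hclosed M ->
  (forall x y, M x -> M y -> M (hadd x y)) -> (forall a x, M x -> M (hscal a x)) ->
  exists p, M p /\ forall c, M c -> hinner (hsub v p) c = 0.
Proof.
  intros M0 Hcl Hadd Hsc.
  destruct (projection_variational M v) as [p [Mp Hp]];
    [exists hzero; auto | auto | apply subspace_convex; auto|].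
  exists p. split; auto. apply subspace_orthogonal; auto.
Qed.
End Projection.

Lemma bounded_cv_subseq (s : nat -> R) K : (forall n, Rabs (s n) <= K) ->
  {f : nat -> nat | inc f /\ exists l, Un_cv (fun n => s (f n)) l}.
Proof.
  intros Hb. apply constructive_indefinite_description.
  destruct (Bolzano_Weierstrass s (fun c => - K <= c <= K) (compact_P3 (- K) K)) as [l Hl].
  { intros n. specialize (Hb n). pose proof (Rle_abs (s n)). pose proof (Rle_abs (- s n)).
    rewrite Rabs_Ropp in *. lra. }
  (* l is a cluster point: pick indices beyond N within 1/(k+1) of l *)
  assert (Near : forall N k, exists p, (N <= p)%nat /\ Rabs (s p - l) < / (INR k + 1)).
  { intros N k.
    assert (Hp : 0 < / (INR k + 1)) by (apply Rinv_0_lt_compat; pose proof (pos_INR k); lra).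
    destruct (Hl (disc l (mkposreal _ Hp)) N) as [p [Hp1 Hp2]];
      [exists (mkposreal _ Hp); intros x Hx; exact Hx|].
    exists p; split; auto. }
  destruct (choice (fun Nk p => (fst Nk <= p)%nat /\ Rabs (s p - l) < / (INR (snd Nk) + 1)))
    as [pick Hpick]; [intros [N k]; apply Near|].
  set (phi := fix phi n := match n with O => pick (O, O) | S n' => pick (S (phi n'), n) end).
  exists phi. split.
  - intros n. simpl. destruct (Hpick (S (phi n), S n)). simpl in *. lia.
  - exists l. intros e He. destruct (inv_small e He) as [N HN]. exists N. intros n Hn.
    unfold R_dist. destruct n as [|n]; simpl.
    + destruct (Hpick (O, O)) as [_ Hp]. cbn [fst snd] in Hp. eapply Rlt_trans; [exact Hp | apply HN; auto].
    + destruct (Hpick (S (phi n), S n)) as [_ Hp]. cbn [fst snd] in Hp.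
      eapply Rlt_trans; [exact Hp | apply HN; auto].
Qed.

Section Diagonal.
Variables (r : nat -> nat -> R) (K : nat -> R).
Hypothesis Hr : forall j n, Rabs (r j n) <= K j.

(** [nested j] extracts a subsequence along which [r 0, ..., r (j-1)] converge. *)
Fixpoint nested (j : nat) : nat -> nat :=
  match j with
  | O => fun n => n
  | S j' => fun n => nested j'
      (proj1_sig (bounded_cv_subseq (fun n => r j' (nested j' n)) (K j')
                    (fun n => Hr j' (nested j' n))) n)
  end.

Lemma nested_inc j : inc (nested j).
Proof.
  induction j; intros n; simpl; [lia|].
  destruct (proj2_sig (bounded_cv_subseq (fun n => r j (nested j n)) (K j)
                         (fun n => Hr j (nested j n)))) as [Hf _].
  apply inc_lt; auto.
Qed.

Lemma nested_cv j : exists l, Un_cv (fun n => r j (nested (S j) n)) l.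
Proof.
  exact (proj2 (proj2_sig (bounded_cv_subseq (fun n => r j (nested j n)) (K j)
                             (fun n => Hr j (nested j n))))).
Qed.

Lemma nested_later d j n : exists k, (k >= n)%nat /\ nested (d + j) n = nested j k.
Proof.
  revert n. induction d as [|d IHd]; intros n; [exists n; auto|].
  simpl. destruct (proj2_sig (bounded_cv_subseq (fun n => r (d + j)%nat (nested (d + j) n))
                               (K (d + j)%nat) (fun n => Hr (d + j)%nat (nested (d + j) n))))
    as [Hf _].
  set (f := proj1_sig _) in *.
  destruct (IHd (f n)) as [k [Hk E]]. exists k. split; auto.
  pose proof (inc_ge f Hf n). lia.
Qed.

Lemma diagonal_extraction :
  exists phi, inc phi /\ forall j, exists l, Un_cv (fun n => r j (phi n)) l.
Proof.
  exists (fun n => nested n n). split.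
  - intros n. simpl.
    destruct (proj2_sig (bounded_cv_subseq (fun n0 => r n (nested n n0)) (K n)
                           (fun n0 => Hr n (nested n n0)))) as [Hf _].
    set (f := proj1_sig _) in *.
    apply inc_lt; [apply nested_inc|]. pose proof (inc_ge f Hf (S n)). lia.
  - intros j. destruct (nested_cv j) as [l Hl]. exists l.
    apply (Un_cv_tail _ _ l (S j) Hl). intros n Hn.
    destruct (nested_later (n - S j) (S j) n) as [k [Hk E]]. exists k. split; auto.
    replace (n - S j + S j)%nat with n in E by lia. rewrite E. auto.
Qed.
End Diagonal.

Section WeakCompactness.
Variable X : Hilbert.
Implicit Types x y v : X.

Lemma weak_limits_closed (w : nat -> X) K :
  (forall n, hnorm (w n) <= K) ->
  hclosed X (fun v => exists l, Un_cv (fun n => hinner (w n) v) l).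
Proof.
  intros Hw vs v Hvs Hcv.
  assert (HK : 0 <= K) by (eapply Rle_trans; [apply hnorm_nonneg | apply (Hw O)]).
  assert (Hbd : forall n u, Rabs (hinner (w n) u) <= K * hnorm u).
  { intros n u. eapply Rle_trans; [apply cauchy_schwarz|].
    apply Rmult_le_compat_r; [apply hnorm_nonneg | auto]. }
  assert (Hc : Cauchy_crit (fun n => hinner (w n) v)).
  { intros e He.
    destruct (Hcv (e / (3 * (K + 1)))) as [k Hk]; [apply Rdiv_lt_0_compat; lra|].
    specialize (Hk k (le_n _)). unfold R_dist in Hk.
    rewrite Rminus_0_r, Rabs_right in Hk by (apply Rle_ge, hnorm_nonneg).
    assert (Close : K * hnorm (hsub (vs k) v) <= e / 3).
    { apply Rle_trans with ((K + 1) * (e / (3 * (K + 1)))); [|right; field; lra].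
      apply Rmult_le_compat; try lra. apply hnorm_nonneg. }
    destruct (Hvs k) as [l Hl]. destruct (CV_Cauchy _ (exist _ l Hl) (e / 3)) as [N HN]; [lra|].
    exists N. intros n1 n2 Hn1 Hn2. specialize (HN n1 n2 Hn1 Hn2). unfold R_dist in *.
    replace (hinner (w n1) v - hinner (w n2) v) with
      (- hinner (w n1) (hsub (vs k) v) + (hinner (w n1) (vs k) - hinner (w n2) (vs k))
       + hinner (w n2) (hsub (vs k) v)) by (inner_expand; ring).
    pose proof (Hbd n1 (hsub (vs k) v)). pose proof (Hbd n2 (hsub (vs k) v)).
    eapply Rle_lt_trans; [apply Rabs_triang|].
    eapply Rle_lt_trans; [apply Rplus_le_compat_r, Rabs_triang|].
    rewrite Rabs_Ropp. lra. }
  destruct (R_complete _ Hc) as [l Hl]. exists l. exact Hl.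
Qed.

Lemma riesz_representation (f : X -> R) K :
  (forall x y, f (hadd x y) = f x + f y) -> (forall a x, f (hscal a x) = a * f x) ->
  (forall v, Rabs (f v) <= K * hnorm v) ->
  exists w, forall v, f v = hinner w v.
Proof.
  intros fadd fsc fbd.
  assert (f0 : f hzero = 0).
  { replace (@hzero X) with (hscal 0 (@hzero X)) by (apply hilbert_ext; intro; inner_expand; ring).
    rewrite fsc; ring. }
  assert (fsub : forall x y, f (hsub x y) = f x - f y).
  { intros x y. replace (hsub x y) with (hadd x (hscal (-1) y))
      by (apply hilbert_ext; intro; inner_expand; ring). rewrite fadd, fsc; ring. }
  destruct (classic (forall v, f v = 0)) as [Hz|Hnz].
  { exists hzero. intros v. rewrite hinner_0l. apply Hz. }
  apply not_all_ex_not in Hnz. destruct Hnz as [e0 He0].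
  (* decompose e0 along the closed subspace ker f *)
  set (N := fun v => f v = 0).
  assert (Ncl : hclosed X N).
  { intros vs v Hvs Hcv. unfold N. apply NNPP; intro Hne. apply (Rabs_no_R0 _ Hne).
    apply Rle_antisym; [|apply Rabs_pos].
    replace 0 with (K * 0) by ring.
    apply (lim_ge_eventually (fun k => K * hnorm (hsub (vs k) v)) _ _ O);
      [apply Un_cv_scal; auto|].
    intros k _. replace (f v) with (- f (hsub (vs k) v)) by (rewrite fsub, (Hvs k); ring).
    rewrite Rabs_Ropp. apply fbd. }
  assert (Nadd : forall x y, N x -> N y -> N (hadd x y))
    by (unfold N; intros x y Hx Hy; rewrite fadd, Hx, Hy; ring).
  assert (Nsc : forall a x, N x -> N (hscal a x)) by (unfold N; intros a x Hx; rewrite fsc, Hx; ring).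
  destruct (orthogonal_decomposition X N e0 f0 Ncl Nadd Nsc) as [p0 [Np0 Ho]].
  set (e := hsub e0 p0) in *.
  assert (fe : f e = f e0) by (unfold e, N in *; rewrite fsub; lra).
  assert (Hee : hinner e e <> 0).
  { intros E. apply hinner_def in E. rewrite E, f0 in fe. auto. }
  (* every v is a multiple of e plus an element of ker f *)
  assert (Hev : forall v, hinner e v = f v / f e * hinner e e).
  { intros v. assert (Nc : N (hsub v (hscal (f v / f e) e))).
    { unfold N. rewrite fsub, fsc. field. rewrite fe; auto. }
    pose proof (Ho _ Nc) as E. revert E. fold e. inner_expand.
    rewrite (hinner_sym _ e v). lra. }
  exists (hscal (f e / hinner e e) e). intros v. rewrite hinner_scall, (Hev v).
  field. rewrite fe. auto.
Qed.

(** If a bounded sequence has convergent pairings with each of its own terms,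
    its pairings with every vector converge: the set of such vectors is a
    closed subspace containing the sequence, and its orthogonal complement is
    orthogonal to the sequence. *)
Lemma pairings_cv_everywhere (w : nat -> X) K :
  (forall n, hnorm (w n) <= K) ->
  (forall k, exists l, Un_cv (fun n => hinner (w n) (w k)) l) ->
  forall v, exists l, Un_cv (fun n => hinner (w n) v) l.
Proof.
  intros Hw Hself v.
  set (M := fun v => exists l, Un_cv (fun n => hinner (w n) v) l).
  destruct (orthogonal_decomposition X M v) as [p [[l Hl] Ho]].
  - exists 0. eapply Un_cv_ext; [|apply Un_cv_const]. intros; simpl; symmetry; apply hinner_0r.
  - apply (weak_limits_closed w K Hw).
  - intros x y [l1 H1] [l2 H2]. exists (l1 + l2).
    eapply Un_cv_ext; [|apply CV_plus; [exact H1 | exact H2]].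
    intros; simpl; rewrite hinner_addr; auto.
  - intros a x [l1 H1]. exists (a * l1). eapply Un_cv_ext; [|apply Un_cv_scal; exact H1].
    intros; simpl; rewrite hinner_scalr; auto.
  - exists l. eapply Un_cv_ext; [|exact Hl]. intros n. simpl.
    assert (E : hinner (hsub v p) (w n) = 0) by (apply Ho, Hself).
    revert E. inner_expand. rewrite !(hinner_sym _ (w n)). lra.
Qed.

(** A bounded sequence whose pairings with every vector converge is weakly
    convergent: the limit functional is represented by a vector. *)
Lemma weak_cv_of_pairings (w : nat -> X) K :
  (forall n, hnorm (w n) <= K) ->
  (forall v, exists l, Un_cv (fun n => hinner (w n) v) l) ->
  exists wl, weak_cv w wl.
Proof.
  intros Hw Hall.
  destruct (choice _ Hall) as [f Hf].
  assert (Lim : forall v l, Un_cv (fun n => hinner (w n) v) l -> f v = l)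
    by (intros v l Hl; apply (UL_sequence _ _ _ (Hf v) Hl)).
  destruct (riesz_representation f K) as [wl Hwl].
  - intros x y. apply Lim. eapply Un_cv_ext; [|apply CV_plus; [exact (Hf x) | exact (Hf y)]].
    intros; simpl; rewrite hinner_addr; auto.
  - intros a x. apply Lim. eapply Un_cv_ext; [|apply Un_cv_scal; exact (Hf x)].
    intros; simpl; rewrite hinner_scalr; auto.
  - intros v. apply Rabs_le. pose proof (hnorm_nonneg X v). split.
    + apply (lim_ge_eventually _ _ _ O (Hf v)). intros n _.
      pose proof (hinner_ge_norms X (w n) v). pose proof (Hw n). nra.
    + apply (lim_le_eventually _ _ _ O (Hf v)). intros n _.
      pose proof (hinner_le_norms X (w n) v). pose proof (Hw n). nra.
  - exists wl. intros v. rewrite <- Hwl. apply Hf.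
Qed.

Theorem weak_compactness (u : nat -> X) K : (forall n, hnorm (u n) <= K) ->
  exists phi, inc phi /\ exists w, weak_cv (fun n => u (phi n)) w.
Proof.
  intros Hu.
  (* extract a subsequence along which every <u n, u j> converges *)
  destruct (diagonal_extraction (fun j n => hinner (u n) (u j)) (fun j => K * hnorm (u j)))
    as [phi [Iphi Hphi]].
  { intros j n. eapply Rle_trans; [apply cauchy_schwarz|].
    apply Rmult_le_compat_r; [apply hnorm_nonneg | auto]. }
  exists phi. split; auto.
  apply (weak_cv_of_pairings _ K); [intros; apply Hu|].
  apply (pairings_cv_everywhere _ K); [intros; apply Hu|].
  intros k. apply Hphi.
Qed.

Lemma weak_cv_close (u v : nat -> X) w :
  weak_cv u w -> Un_cv (fun n => hnorm (hsub (u n) (v n))) 0 -> weak_cv v w.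
Proof.
  intros Hw Hd t.
  apply (Un_cv_close (fun n => hinner (u n) t) _ (fun n => hnorm (hsub (u n) (v n)) * hnorm t)).
  - apply Hw.
  - replace 0 with (0 * hnorm t) by ring. apply CV_mult; auto. apply Un_cv_const.
  - intros n. replace (hinner (v n) t - hinner (u n) t) with (- hinner (hsub (u n) (v n)) t)
      by (inner_expand; ring).
    rewrite Rabs_Ropp. apply cauchy_schwarz.
Qed.
End WeakCompactness.

Definition summable (f : nat -> R) : Prop := exists S, Un_cv (fun N => sum_f_R0 f N) S.

Lemma summable_plus f g : summable f -> summable g -> summable (fun n => f n + g n).
Proof.
  intros [S1 H1] [S2 H2]. exists (S1 + S2).
  eapply Un_cv_ext; [|apply CV_plus; [exact H1 | exact H2]]. intros; simpl. symmetry; apply plus_sum.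
Qed.

Lemma summable_scal f a : summable f -> summable (fun n => a * f n).
Proof.
  intros [S HS]. exists (a * S). eapply Un_cv_ext; [|apply Un_cv_scal; exact HS].
  intros n; simpl. induction n; simpl; auto. rewrite <- IHn. ring.
Qed.

Lemma summable_zero : summable (fun _ => 0).
Proof.
  exists 0. eapply Un_cv_ext; [|apply Un_cv_const]. intros n; simpl.
  induction n; simpl; auto. rewrite <- IHn. ring.
Qed.

Lemma partial_sums_incr f : (forall n, 0 <= f n) ->
  forall a b, (a <= b)%nat -> sum_f_R0 f a <= sum_f_R0 f b.
Proof. intros Hf a b Hab. induction Hab; [lra|]. simpl. specialize (Hf (S m)). lra. Qed.

Lemma partial_sums_le_sum f S : (forall n, 0 <= f n) ->
  Un_cv (fun N => sum_f_R0 f N) S -> forall n, sum_f_R0 f n <= S.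
Proof.
  intros Hf HS n. apply (lim_ge_eventually _ _ _ n HS). intros k Hk.
  apply partial_sums_incr; auto.
Qed.

Lemma summable_le f g : (forall n, 0 <= f n <= g n) -> summable g -> summable f.
Proof.
  intros Hfg [Sg HS].
  assert (Bd : forall n, sum_f_R0 g n <= Sg)
    by (apply partial_sums_le_sum; auto; intros n; specialize (Hfg n); lra).
  destruct (growing_cv (fun N => sum_f_R0 f N)) as [l Hl].
  - intros n. simpl. specialize (Hfg (S n)). lra.
  - exists Sg. intros x [i ->]. eapply Rle_trans; [|apply (Bd i)].
    apply sum_Rle. intros; apply Hfg.
  - exists l; auto.
Qed.

Lemma summable_term_cv0 f : summable f -> Un_cv f 0.
Proof.
  intros [S HS]. apply Un_cv_of_succ. replace 0 with (S - S) by ring.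
  eapply Un_cv_ext; [|apply CV_minus; [apply (Un_cv_succ _ _ HS) | exact HS]].
  intros n. simpl. ring.
Qed.

Lemma summable_sum_lt (G : nat -> nat -> R) k :
  (forall j, summable (G j)) -> summable (fun n => sum_lt k (fun j => G j n)).
Proof.
  intros HG. induction k; simpl; [apply summable_zero | apply summable_plus; auto].
Qed.

Lemma summable_sumI m (G : idx m -> nat -> R) :
  (forall i, summable (G i)) -> summable (fun n => sumI m (fun i => G i n)).
Proof.
  intros HG.
  apply (summable_sum_lt (fun k n => match lt_dec k m with
                                      | left h => G (exist _ k h) n | right _ => 0 end)).
  intros j. destruct (lt_dec j m); [apply HG | apply summable_zero].
Qed.

Lemma product_summable m (H : idx m -> Hilbert) (a : forall i, nat -> H i) :
  (forall i, abs_summable (a i)) -> summable (fun n => hnorm ((fun i => a i n) : PX m H)).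
Proof.
  intros Ha.
  apply (summable_le _ (fun n => sumI m (fun i => hnorm (a i n)))).
  - intros n. split; [apply hnorm_nonneg | apply (hnorm_le_sum_components m H (fun i => a i n))].
  - apply summable_sumI. exact Ha.
Qed.

Lemma quasi_fejer_cv a e : (forall n, 0 <= a n) -> (forall n, 0 <= e n) -> summable e ->
  (forall n, a (S n) <= a n + e n) -> exists L, Un_cv a L.
Proof.
  intros Ha He [Sum HS] Hr.
  assert (Bd : forall n, sum_lt n e <= Sum).
  { intros [|n]; simpl.
    - apply (lim_ge_eventually _ _ _ O HS). intros k _. apply cond_pos_sum; auto.
    - pose proof (partial_sums_le_sum e Sum He HS n).
      replace (sum_lt n e + e n) with (sum_lt (S n) e) by reflexivity.
      enough (sum_lt (S n) e = sum_f_R0 e n) by lra.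
      clear. induction n; simpl in *; [ring | rewrite IHn; ring]. }
  (* a n - sum_{k<n} e k is nonincreasing and bounded below *)
  destruct (decreasing_cv (fun n => a n - sum_lt n e)) as [l Hl].
  - intros n. simpl. specialize (Hr n). lra.
  - exists Sum. intros x [i ->]. unfold opp_seq. specialize (Bd i). specialize (Ha i). lra.
  - exists (l + Sum).
    eapply Un_cv_ext; [|apply (CV_plus (fun n => a n - sum_lt n e) (fun n => sum_lt n e));
                        [exact Hl|]]; [intros; simpl; ring|].
    apply Un_cv_of_succ. eapply Un_cv_ext; [|exact HS]. intros n.
    induction n; simpl in *; [ring | rewrite <- IHn; ring].
Qed.

(** Tseng's forward-backward-forward method for the monotone inclusion
    0 in B w + N_C w, with B monotone and chi-Lipschitz. *)
Section ForwardBackwardForward.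
Variable X : Hilbert.
Variable C : X -> Prop.
Hypothesis C_convex : hconvex X C.
Variable B : X -> X.
Variable chi : R.
Hypothesis chi_pos : 0 < chi.
Hypothesis B_monotone : forall u v, hinner (hsub (B u) (B v)) (hsub u v) >= 0.
Hypothesis B_lipschitz : forall u v, hnorm (hsub (B u) (B v)) <= chi * hnorm (hsub u v).
Variable P : X -> X.
Hypothesis P_nearest :
  forall v, C (P v) /\ forall c, C c -> hnorm (hsub v (P v)) <= hnorm (hsub v c).

Definition solution (w : X) : Prop :=
  C w /\ forall c, C c -> hinner (hsub c w) (hopp (B w)) <= 0.

Lemma proj_variational v :
  C (P v) /\ forall c, C c -> hinner (hsub v (P v)) (hsub c (P v)) <= 0.
Proof.
  destruct (P_nearest v) as [H1 H2]. split; auto. apply nearest_point_variational; auto.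
Qed.

Lemma proj_nonexpansive v1 v2 : hnorm (hsub (P v1) (P v2)) <= hnorm (hsub v1 v2).
Proof.
  destruct (proj_variational v1) as [C1 V1]; destruct (proj_variational v2) as [C2 V2].
  specialize (V1 _ C2); specialize (V2 _ C1).
  assert (E : hinner (hsub (P v1) (P v2)) (hsub (P v1) (P v2))
              <= hinner (hsub v1 v2) (hsub (P v1) (P v2))).
  { revert V1 V2. inner_expand. inner_orient (cons v1 (cons v2 (cons (P v1) (cons (P v2) nil)))).
    lra. }
  pose proof (hinner_le_norms X (hsub v1 v2) (hsub (P v1) (P v2))).
  rewrite <- hnorm_sq in E.
  pose proof (hnorm_nonneg X (hsub (P v1) (P v2))). pose proof (hnorm_nonneg X (hsub v1 v2)).
  nra.
Qed.

Definition fbf_point (gam : R) (x : X) : X := P (hsub x (hscal gam (B x))).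
Definition fbf_step (gam : R) (x : X) : X :=
  hsub (fbf_point gam x) (hscal gam (hsub (B (fbf_point gam x)) (B x))).

Lemma fbf_step_fejer x gam z : 0 <= gam -> solution z ->
  hinner (hsub (fbf_step gam x) z) (hsub (fbf_step gam x) z)
  <= hinner (hsub x z) (hsub x z)
     - (1 - gam * gam * (chi * chi)) * hinner (hsub x (fbf_point gam x)) (hsub x (fbf_point gam x)).
Proof.
  intros Hg [Cz Hz]. unfold fbf_step. set (p := fbf_point gam x).
  destruct (proj_variational (hsub x (hscal gam (B x)))) as [Cp VI]. fold (fbf_point gam x) p in Cp, VI.
  specialize (VI z Cz). specialize (Hz p Cp).
  assert (Li2 : hinner (hsub (B p) (B x)) (hsub (B p) (B x))
                <= chi * chi * hinner (hsub p x) (hsub p x)).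
  { rewrite <- !hnorm_sq. pose proof (B_lipschitz p x).
    pose proof (hnorm_nonneg X (hsub (B p) (B x))). nra. }
  assert (Mo : 0 <= gam * hinner (hsub (B p) (B z)) (hsub p z))
    by (apply Rmult_le_pos; [lra | apply Rge_le, B_monotone]).
  assert (Zg : gam * hinner (hsub p z) (hopp (B z)) <= 0).
  { replace 0 with (gam * 0) by ring. apply Rmult_le_compat_l; lra. }
  assert (Lg : gam * gam * hinner (hsub (B p) (B x)) (hsub (B p) (B x))
               <= gam * gam * (chi * chi * hinner (hsub p x) (hsub p x)))
    by (apply Rmult_le_compat_l; nra).
  clear Hz Li2. revert VI Mo Zg Lg. inner_expand.
  inner_orient (cons x (cons z (cons p (cons (B x) (cons (B p) (cons (B z) nil)))))).
  nra.
Qed.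

Lemma minty_solution w : C w -> (forall c, C c -> 0 <= hinner (B c) (hsub c w)) -> solution w.
Proof.
  intros Cw Minty. split; auto. intros c Cc.
  assert (0 <= hinner (B w) (hsub c w)); [|rewrite hinner_oppr, hinner_sym; lra].
  apply (nonneg_of_small_multiples _ (chi * hinner (hsub c w) (hsub c w))). intros t Ht.
  set (ct := hadd (hscal (1 - t) w) (hscal t c)).
  assert (E : hsub ct w = hscal t (hsub c w))
    by (apply hilbert_ext; intro; unfold ct; inner_expand; ring).
  pose proof (Minty ct (C_convex w c t Cw Cc ltac:(lra))) as M1.
  rewrite E, hinner_scalr in M1.
  assert (M2 : 0 <= hinner (B ct) (hsub c w)).
  { destruct (Rle_dec 0 (hinner (B ct) (hsub c w))); auto. nra. }
  pose proof (B_lipschitz ct w) as L. rewrite E, hnorm_scal, Rabs_right in L by lra.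
  pose proof (hinner_le_norms X (hsub (B ct) (B w)) (hsub c w)) as CS.
  pose proof (hnorm_nonneg X (hsub c w)). pose proof (hnorm_nonneg X (hsub (B ct) (B w))).
  assert (hnorm (hsub (B ct) (B w)) * hnorm (hsub c w)
          <= chi * (t * hnorm (hsub c w)) * hnorm (hsub c w)) by (apply Rmult_le_compat_r; lra).
  rewrite <- hnorm_sq.
  replace (hinner (B w) (hsub c w))
    with (hinner (B ct) (hsub c w) - hinner (hsub (B ct) (B w)) (hsub c w)) by (inner_expand; ring).
  nra.
Qed.

(** Dual estimate at the exact point p: the Minty inequality holds up to an
    error proportional to the residual |x - p|. *)
Lemma fbf_point_minty x gam c : 0 < gam -> C c ->
  - ((1 / gam + chi) * hnorm (hsub x (fbf_point gam x)) * hnorm (hsub c (fbf_point gam x)))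
  <= hinner (B c) (hsub c (fbf_point gam x)).
Proof.
  intros Hg Cc. set (p := fbf_point gam x).
  destruct (proj_variational (hsub x (hscal gam (B x)))) as [_ VI].
  fold (fbf_point gam x) p in VI. specialize (VI c Cc).
  pose proof (Rge_le _ _ (B_monotone c p)) as Mo.
  pose proof (hinner_ge_norms X (hsub x p) (hsub c p)) as C1.
  pose proof (hinner_ge_norms X (hsub (B p) (B x)) (hsub c p)) as C2.
  pose proof (B_lipschitz p x) as Li. rewrite (hnorm_sub_sym X p x) in Li.
  pose proof (hnorm_nonneg X (hsub x p)). pose proof (hnorm_nonneg X (hsub c p)).
  set (D := hnorm (hsub x p)) in *. set (Rc := hnorm (hsub c p)) in *.
  assert (C2' : - (gam * (chi * D * Rc)) <= gam * hinner (hsub (B p) (B x)) (hsub c p)).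
  { assert (hnorm (hsub (B p) (B x)) * Rc <= chi * D * Rc) by (apply Rmult_le_compat_r; lra).
    replace (- (gam * (chi * D * Rc))) with (gam * (- (chi * D * Rc))) by ring.
    apply Rmult_le_compat_l; lra. }
  assert (Mo' : 0 <= gam * hinner (hsub (B c) (B p)) (hsub c p)) by (apply Rmult_le_pos; lra).
  assert (Key : - (D * Rc) - gam * (chi * D * Rc) <= gam * hinner (B c) (hsub c p)).
  { clear Mo Li C2. revert VI C1 Mo' C2'. inner_expand. lra. }
  apply (Rmult_le_reg_l gam); auto.
  replace (gam * - ((1 / gam + chi) * D * Rc)) with (- (D * Rc) - gam * (chi * D * Rc))
    by (field; lra).
  lra.
Qed.

Variable eps : R.
Hypothesis eps_pos : 0 < eps.
Variable gamma : nat -> R.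
Hypothesis gamma_range : forall n, eps <= gamma n <= (1 - eps) / chi.
Variables Ea Eb Ec : nat -> X.
Hypothesis Ea_summable : summable (fun n => hnorm (Ea n)).
Hypothesis Eb_summable : summable (fun n => hnorm (Eb n)).
Hypothesis Ec_summable : summable (fun n => hnorm (Ec n)).
Variables xs ys ps qs : nat -> X.
Hypothesis ys_def : forall n, ys n = hsub (xs n) (hscal (gamma n) (hadd (B (xs n)) (Ea n))).
Hypothesis ps_def : forall n, ps n = hadd (P (ys n)) (Eb n).
Hypothesis qs_def : forall n, qs n = hsub (ps n) (hscal (gamma n) (hadd (B (ps n)) (Ec n))).
Hypothesis xs_succ : forall n, xs (S n) = hadd (hsub (xs n) (ys n)) (qs n).
Hypothesis solution_exists : exists z, solution z.

Lemma gamma_pos n : 0 < gamma n.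
Proof. destruct (gamma_range n); lra. Qed.

Lemma gamma_chi n : gamma n * chi <= 1 - eps.
Proof.
  destruct (gamma_range n) as [_ H2]. apply (Rmult_le_compat_r chi) in H2; [|lra].
  replace ((1 - eps) / chi * chi) with (1 - eps) in H2 by (field; lra). auto.
Qed.

Lemma eps_lt_1 : eps < 1.
Proof. pose proof (gamma_chi O). pose proof (gamma_range O). nra. Qed.

Definition pt n : X := fbf_point (gamma n) (xs n).
Definition Tx n : X := fbf_step (gamma n) (xs n).

Definition err n : R := hnorm (Ea n) + hnorm (Eb n) + hnorm (Ec n).
Definition Kerr : R := 3 * ((1 - eps) / chi + 1).

Lemma err_nonneg n : 0 <= err n.
Proof.
  unfold err. pose proof (hnorm_nonneg X (Ea n)); pose proof (hnorm_nonneg X (Eb n));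
  pose proof (hnorm_nonneg X (Ec n)). lra.
Qed.

Lemma Kerr_ge n : 3 * (gamma n + 1) <= Kerr.
Proof. pose proof (gamma_range n). unfold Kerr. lra. Qed.

Lemma Kerr_pos : 0 < Kerr.
Proof. pose proof (Kerr_ge O). pose proof (gamma_pos O). lra. Qed.

Lemma point_error n : hnorm (hsub (ps n) (pt n)) <= gamma n * hnorm (Ea n) + hnorm (Eb n).
Proof.
  replace (hsub (ps n) (pt n))
    with (hadd (hsub (P (ys n)) (pt n)) (Eb n))
    by (rewrite ps_def; apply hilbert_ext; intro t; inner_expand; ring).
  eapply Rle_trans; [apply hnorm_triangle | apply Rplus_le_compat_r].
  eapply Rle_trans; [apply proj_nonexpansive|].
  replace (hsub (ys n) (hsub (xs n) (hscal (gamma n) (B (xs n)))))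
    with (hopp (hscal (gamma n) (Ea n)))
    by (rewrite ys_def; apply hilbert_ext; intro t; inner_expand; ring).
  rewrite hnorm_opp, hnorm_scal, Rabs_right; [lra|]. pose proof (gamma_pos n); lra.
Qed.

Lemma step_error n : hnorm (hsub (xs (S n)) (Tx n))
  <= gamma n * hnorm (Ea n) + (1 + gamma n * chi) * hnorm (hsub (ps n) (pt n))
     + gamma n * hnorm (Ec n).
Proof.
  replace (hsub (xs (S n)) (Tx n)) with
    (hadd (hadd (hscal (gamma n) (Ea n)) (hsub (ps n) (pt n)))
          (hopp (hadd (hscal (gamma n) (hsub (B (ps n)) (B (pt n)))) (hscal (gamma n) (Ec n)))))
    by (rewrite xs_succ, qs_def, ys_def; unfold Tx, fbf_step; fold (pt n);
        apply hilbert_ext; intro t; inner_expand; ring).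
  pose proof (gamma_pos n) as Hg.
  eapply Rle_trans; [apply hnorm_triangle|]. rewrite hnorm_opp.
  pose proof (hnorm_triangle X (hscal (gamma n) (Ea n)) (hsub (ps n) (pt n))).
  pose proof (hnorm_triangle X (hscal (gamma n) (hsub (B (ps n)) (B (pt n))))
                (hscal (gamma n) (Ec n))).
  rewrite !hnorm_scal, !Rabs_right in * by lra.
  pose proof (B_lipschitz (ps n) (pt n)).
  assert (gamma n * hnorm (hsub (B (ps n)) (B (pt n)))
          <= gamma n * (chi * hnorm (hsub (ps n) (pt n)))) by (apply Rmult_le_compat_l; lra).
  nra.
Qed.

Lemma point_error_le n : hnorm (hsub (ps n) (pt n)) <= Kerr * err n.
Proof.
  pose proof (point_error n). pose proof (Kerr_ge n). pose proof (gamma_pos n). unfold err in *.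
  pose proof (hnorm_nonneg X (Ea n)); pose proof (hnorm_nonneg X (Eb n));
  pose proof (hnorm_nonneg X (Ec n)). nra.
Qed.

Lemma step_error_le n : hnorm (hsub (xs (S n)) (Tx n)) <= Kerr * err n.
Proof.
  pose proof (step_error n). pose proof (point_error n). pose proof (Kerr_ge n). pose proof (gamma_pos n).
  pose proof (gamma_chi n). pose proof (gamma_pos n). pose proof eps_lt_1.
  pose proof (hnorm_nonneg X (hsub (ps n) (pt n))). unfold err in *.
  pose proof (hnorm_nonneg X (Ea n)); pose proof (hnorm_nonneg X (Eb n));
  pose proof (hnorm_nonneg X (Ec n)).
  assert ((1 + gamma n * chi) * hnorm (hsub (ps n) (pt n))
          <= 2 * (gamma n * hnorm (Ea n) + hnorm (Eb n))) by nra.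
  nra.
Qed.

Lemma err_summable : summable (fun n => Kerr * err n).
Proof.
  apply summable_scal. unfold err.
  apply summable_plus; [apply summable_plus|]; assumption.
Qed.

Lemma err_cv0 : Un_cv (fun n => Kerr * err n) 0.
Proof. apply summable_term_cv0, err_summable. Qed.

Definition fejer_gap : R := 1 - (1 - eps) * (1 - eps).

Lemma fejer_gap_pos : 0 < fejer_gap.
Proof. unfold fejer_gap. pose proof eps_lt_1. nra. Qed.

Lemma fejer_iterate z n : solution z ->
  hinner (hsub (Tx n) z) (hsub (Tx n) z)
  <= hinner (hsub (xs n) z) (hsub (xs n) z)
     - fejer_gap * hinner (hsub (xs n) (pt n)) (hsub (xs n) (pt n)).
Proof.
  intros Hz. pose proof (fbf_step_fejer (xs n) (gamma n) z) as F.
  pose proof (gamma_pos n). pose proof (gamma_chi n). pose proof eps_lt_1.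
  pose proof (hinner_pos X (hsub (xs n) (pt n))).
  assert (0 <= gamma n * chi) by nra.
  assert (gamma n * gamma n * (chi * chi) <= (1 - eps) * (1 - eps)) by nra.
  unfold fejer_gap, Tx, pt in *. specialize (F ltac:(lra) Hz). nra.
Qed.

Lemma Tx_closer z n : solution z -> hnorm (hsub (Tx n) z) <= hnorm (hsub (xs n) z).
Proof.
  intros Hz. apply hnorm_le_of_sq; [apply hnorm_nonneg|]. rewrite hnorm_sq.
  pose proof (fejer_iterate z n Hz). pose proof (hinner_pos X (hsub (xs n) (pt n))).
  pose proof fejer_gap_pos. nra.
Qed.

Lemma dist_solution_cv z : solution z -> exists L, Un_cv (fun n => hnorm (hsub (xs n) z)) L.
Proof.
  intros Hz. apply (quasi_fejer_cv _ (fun n => Kerr * err n)).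
  - intros; apply hnorm_nonneg.
  - intros n; pose proof Kerr_pos; pose proof (err_nonneg n); nra.
  - apply err_summable.
  - intros n. eapply Rle_trans; [apply (hnorm_sub_triangle X (xs (S n)) (Tx n) z)|].
    pose proof (step_error_le n). pose proof (Tx_closer z n Hz). lra.
Qed.

Lemma dist_solution_Tx_cv z L : solution z ->
  Un_cv (fun n => hnorm (hsub (xs n) z)) L -> Un_cv (fun n => hnorm (hsub (Tx n) z)) L.
Proof.
  intros Hz HL.
  apply (Un_cv_close (fun n => hnorm (hsub (xs (S n)) z)) _ (fun n => Kerr * err n));
    [exact (Un_cv_succ (fun n => hnorm (hsub (xs n) z)) L HL) | apply err_cv0|].
  intros n. pose proof (step_error_le n).
  pose proof (hnorm_sub_triangle X (xs (S n)) (Tx n) z).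
  pose proof (hnorm_sub_triangle X (Tx n) (xs (S n)) z).
  rewrite (hnorm_sub_sym X (Tx n) (xs (S n))) in *. apply Rabs_le. lra.
Qed.

Lemma residual_cv0 : Un_cv (fun n => hnorm (hsub (xs n) (pt n))) 0.
Proof.
  destruct solution_exists as [z Hz]. destruct (dist_solution_cv z Hz) as [L HL].
  pose proof (dist_solution_Tx_cv z L Hz HL) as HT.
  apply sq_cv0; [intros; apply hnorm_nonneg|].
  apply (squeeze0 _ (fun n => / fejer_gap * (hnorm (hsub (xs n) z) * hnorm (hsub (xs n) z)
                                             - hnorm (hsub (Tx n) z) * hnorm (hsub (Tx n) z)))).
  - intros n. pose proof (hnorm_nonneg X (hsub (xs n) (pt n))). split; [nra|].
    pose proof (fejer_iterate z n Hz) as F. rewrite <- !hnorm_sq in F.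
    pose proof fejer_gap_pos.
    apply (Rmult_le_reg_l fejer_gap); auto.
    rewrite <- (Rmult_assoc fejer_gap (/ fejer_gap)), Rinv_r, Rmult_1_l by lra. lra.
  - replace 0 with (/ fejer_gap * (L * L - L * L)) by ring.
    apply Un_cv_scal, CV_minus; apply CV_mult; auto.
Qed.

Lemma xs_ps_cv0 : Un_cv (fun n => hnorm (hsub (xs n) (ps n))) 0.
Proof.
  apply (squeeze0 _ (fun n => hnorm (hsub (xs n) (pt n)) + Kerr * err n)).
  - intros n. split; [apply hnorm_nonneg|].
    eapply Rle_trans; [apply (hnorm_sub_triangle X (xs n) (pt n) (ps n))|].
    rewrite (hnorm_sub_sym X (pt n)). pose proof (point_error_le n). lra.
  - replace 0 with (0 + 0) by ring. apply CV_plus; [apply residual_cv0 | apply err_cv0].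
Qed.

Lemma xs_bounded : exists K, forall n, hnorm (xs n) <= K.
Proof.
  destruct solution_exists as [z Hz]. destruct (dist_solution_cv z Hz) as [L HL].
  destruct (cv_bounded _ _ HL) as [K HK].
  exists (K + hnorm z). intros n. pose proof (hnorm_sub_ge X (xs n) z). specialize (HK n). lra.
Qed.

Lemma dist_pt_bounded c : exists Rb, forall k, hnorm (hsub c (pt k)) <= Rb.
Proof.
  destruct xs_bounded as [K HK]. destruct (cv_bounded _ _ residual_cv0) as [Kd HKd].
  exists (hnorm c + K + Kd). intros k.
  pose proof (hnorm_sub_triangle X c (xs k) (pt k)).
  pose proof (hnorm_sub_triangle X c hzero (xs k)).
  replace (hsub c hzero) with c in * by (apply hilbert_ext; intro; inner_expand; ring).
  rewrite (hnorm_sub_sym X hzero (xs k)) in *.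
  replace (hsub (xs k) hzero) with (xs k) in * by (apply hilbert_ext; intro; inner_expand; ring).
  specialize (HK k); specialize (HKd k). lra.
Qed.

Section ClusterPoint.
Variables (phi : nat -> nat) (w : X).
Hypothesis phi_inc : inc phi.
Hypothesis phi_weak : weak_cv (fun n => xs (phi n)) w.

Lemma cluster_pt_weak : weak_cv (fun n => pt (phi n)) w.
Proof.
  apply (weak_cv_close X _ _ _ phi_weak).
  apply (Un_cv_sub (fun n => hnorm (hsub (xs n) (pt n)))); auto. apply residual_cv0.
Qed.

(** w is the weak limit of points of C, hence equals its projection. *)
Lemma cluster_in_C : C w.
Proof.
  destruct (proj_variational w) as [Cpw VI].
  assert (L : hinner w (hsub w (P w)) <= hinner (P w) (hsub w (P w))).
  { apply (lim_le_eventually (fun n => hinner (pt (phi n)) (hsub w (P w))) _ _ O);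
      [apply cluster_pt_weak|].
    intros n _. assert (Cq : C (pt (phi n))) by apply proj_variational.
    specialize (VI _ Cq). set (q := pt (phi n)) in *. revert VI. inner_expand.
    inner_orient (cons w (cons (P w) (cons q nil))). lra. }
  assert (E : hinner (hsub w (P w)) (hsub w (P w)) = 0).
  { apply Rle_antisym; [|apply hinner_pos]. revert L. inner_expand.
    inner_orient (cons w (cons (P w) nil)). lra. }
  apply hsub_eq0 in E. rewrite E. auto.
Qed.

(** Passing to the limit in [fbf_point_minty] gives the Minty inequality. *)
Lemma cluster_minty c : C c -> 0 <= hinner (B c) (hsub c w).
Proof.
  intros Cc. destruct (dist_pt_bounded c) as [Rb HR].
  assert (Heps1 : 0 < 1 / eps) by (apply Rdiv_lt_0_compat; lra).
  set (kap := (1 / eps + chi) * Rb).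
  replace (hinner (B c) (hsub c w)) with (hinner (B c) (hsub c w) + kap * 0) by ring.
  apply (lim_ge_eventually (fun n => hinner (B c) (hsub c (pt (phi n)))
                                     + kap * hnorm (hsub (xs (phi n)) (pt (phi n)))) _ _ O).
  - apply CV_plus.
    + replace (hinner (B c) (hsub c w)) with (hinner (B c) c - hinner w (B c))
        by (inner_expand; rewrite (hinner_sym _ w); ring).
      eapply Un_cv_ext;
        [|apply (CV_minus (fun _ => hinner (B c) c) (fun n => hinner (pt (phi n)) (B c)));
          [apply Un_cv_const | apply cluster_pt_weak]].
      intros n. cbv beta. inner_expand. rewrite (hinner_sym _ (pt (phi n))). ring.
    + apply Un_cv_scal, (Un_cv_sub (fun n => hnorm (hsub (xs n) (pt n)))); auto.
      apply residual_cv0.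
  - intros n _. set (k := phi n).
    pose proof (fbf_point_minty (xs k) (gamma k) c (gamma_pos k) Cc) as Mk.
    fold (pt k) in Mk.
    pose proof (HR k). pose proof (hnorm_nonneg X (hsub (xs k) (pt k))).
    pose proof (hnorm_nonneg X (hsub c (pt k))).
    assert (1 / gamma k <= 1 / eps).
    { unfold Rdiv. rewrite !Rmult_1_l. apply Rinv_le_contravar; [lra | apply gamma_range]. }
    assert ((1 / gamma k + chi) * hnorm (hsub (xs k) (pt k)) * hnorm (hsub c (pt k))
            <= kap * hnorm (hsub (xs k) (pt k))).
    { unfold kap.
      replace ((1 / eps + chi) * Rb * hnorm (hsub (xs k) (pt k)))
        with ((1 / eps + chi) * hnorm (hsub (xs k) (pt k)) * Rb) by ring.
      apply Rmult_le_compat; try nra. pose proof (gamma_pos k).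
      assert (0 < 1 / gamma k) by (apply Rdiv_lt_0_compat; lra). nra. }
    lra.
Qed.

Lemma cluster_solution : solution w.
Proof. apply minty_solution; [apply cluster_in_C | apply cluster_minty]. Qed.
End ClusterPoint.

(** Opial's argument: two weak cluster points that are solutions coincide. *)
Lemma cluster_unique phi1 phi2 w1 w2 : solution w1 -> solution w2 -> inc phi1 -> inc phi2 ->
  weak_cv (fun n => xs (phi1 n)) w1 -> weak_cv (fun n => xs (phi2 n)) w2 -> w1 = w2.
Proof.
  intros Z1 Z2 I1 I2 W1 W2.
  destruct (dist_solution_cv w1 Z1) as [L1 HL1]. destruct (dist_solution_cv w2 Z2) as [L2 HL2].
  (* <xs n, w1 - w2> converges, since it is a combination of the distances *)
  set (l := (L2 * L2 - L1 * L1 - hinner w2 w2 + hinner w1 w1) / 2).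
  assert (Hr : Un_cv (fun n => hinner (xs n) (hsub w1 w2)) l).
  { replace l with (/ 2 * ((L2 * L2 - L1 * L1) + (hinner w1 w1 - hinner w2 w2)))
      by (unfold l; field).
    eapply Un_cv_ext; [|apply Un_cv_scal, CV_plus;
      [apply CV_minus; apply CV_mult; [exact HL2 | exact HL2 | exact HL1 | exact HL1]
      | apply (Un_cv_const (hinner w1 w1 - hinner w2 w2))]].
    intros n. cbv beta. rewrite !hnorm_sq. inner_expand.
    inner_orient (cons (xs n) (cons w1 (cons w2 nil))). field. }
  assert (E1 : hinner w1 (hsub w1 w2) = l)
    by (apply (UL_sequence _ _ _ (W1 _)), (Un_cv_sub (fun n => hinner (xs n) (hsub w1 w2))); auto).
  assert (E2 : hinner w2 (hsub w1 w2) = l)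
    by (apply (UL_sequence _ _ _ (W2 _)), (Un_cv_sub (fun n => hinner (xs n) (hsub w1 w2))); auto).
  apply hsub_eq0. revert E1 E2. inner_expand. inner_orient (cons w1 (cons w2 nil)). lra.
Qed.

Theorem fbf_weak_convergence : exists w, solution w /\ weak_cv xs w /\ weak_cv ps w.
Proof.
  destruct xs_bounded as [K HK].
  destruct (weak_compactness X xs K HK) as [phi0 [I0 [w Hw]]].
  pose proof (cluster_solution phi0 w I0 Hw) as Zw.
  assert (Wx : weak_cv xs w).
  { (* otherwise a subsequence stays away from w, and has another cluster point *)
    intros v. apply NNPP. intros Hn.
    destruct (not_cv_sub _ _ Hn) as [eta [Heta [psi [Ipsi Hpsi]]]].
    destruct (weak_compactness X (fun n => xs (psi n)) K (fun n => HK (psi n)))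
      as [phi1 [I1 [w' Hw']]].
    pose proof (inc_comp _ _ Ipsi I1) as I2.
    pose proof (cluster_solution _ w' I2 Hw') as Zw'.
    pose proof (cluster_unique _ _ _ _ Zw Zw' I0 I2 Hw Hw') as E. subst w'.
    destruct (Hw' v eta Heta) as [N HN]. specialize (HN N (le_n _)).
    specialize (Hpsi (phi1 N)). unfold R_dist in HN. lra. }
  exists w. split; [|split]; auto. apply (weak_cv_close X xs ps w Wx xs_ps_cv0).
Qed.
End ForwardBackwardForward.

Lemma min_of_monotone_derivative (f f' : R -> R) :
  (forall s, derivable_pt_lim f s (f' s)) -> (forall s, 0 < s < 1 -> f' 0 <= f' s) ->
  0 <= f' 0 -> f 0 <= f 1.
Proof.
  intros Hder Hmon H0.
  destruct (MVT_cor2 f f' 0 1 ltac:(lra) (fun c _ => Hder c)) as [xi [E Hxi]].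
  pose proof (Hmon xi Hxi). nra.
Qed.

Section NashEquilibrium.
Variable m : nat.
Variable H : idx m -> Hilbert.
Variable C : PH H -> Prop.
Variable g : forall i : idx m, PH H -> R.
Variable grad : forall i : idx m, PH H -> H i.
Hypothesis grad_diff : forall (i : idx m) (x : PH H) (eps : R), eps > 0 ->
  exists delta, delta > 0 /\ forall h : H i, hnorm h < delta ->
    Rabs (g i (upd x i (hadd (x i) h)) - g i x - hinner (grad i x) h) <= eps * hnorm h.
Hypothesis grad_monotone : forall x y : PH H,
  sumI m (fun i => hinner (hsub (grad i x) (grad i y)) (hsub (x i) (y i))) >= 0.

Definition pseudo_gradient (x : PX m H) : PX m H := fun i => grad i x.

Definition coord_line (w : PH H) (i : idx m) (d : H i) (s : R) : PX m H :=
  upd w i (hadd (w i) (hscal s d)).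

Lemma coord_line_shift w i d s h :
  upd (coord_line w i d s) i (hadd (coord_line w i d s i) (hscal h d)) = coord_line w i d (s + h).
Proof.
  unfold coord_line. rewrite upd_upd, upd_same. f_equal.
  apply hilbert_ext; intro z. inner_expand. ring.
Qed.

(** The derivative of g_i along the coordinate line, obtained from the
    Frechet estimate with tolerance e / (2 (|d| + 1)). *)
Lemma coord_line_derivative w i d s :
  derivable_pt_lim (fun s => g i (coord_line w i d s)) s
                   (hinner (grad i (coord_line w i d s)) d).
Proof.
  intros e He. set (nd := hnorm d). pose proof (hnorm_nonneg _ d) as Hnd. fold nd in Hnd.
  destruct (grad_diff i (coord_line w i d s) (e / (2 * (nd + 1)))) as [dl [Hdl Hd]].
  { apply Rdiv_lt_0_compat; lra. }
  assert (Hdp : 0 < dl / (nd + 1)) by (apply Rdiv_lt_0_compat; lra).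
  exists (mkposreal _ Hdp). intros h Hh0 Hh. simpl in Hh.
  assert (Hhn : Rabs h * nd < dl).
  { apply Rle_lt_trans with (Rabs h * (nd + 1));
      [apply Rmult_le_compat_l; [apply Rabs_pos | lra]|].
    apply (Rmult_lt_reg_r (/ (nd + 1))); [apply Rinv_0_lt_compat; lra|].
    rewrite Rmult_assoc, Rinv_r, Rmult_1_r by lra. auto. }
  specialize (Hd (hscal h d)). rewrite hnorm_scal in Hd. fold nd in Hd.
  specialize (Hd Hhn). rewrite coord_line_shift, hinner_scalr in Hd.
  set (f1 := g i (coord_line w i d (s + h))) in *. set (f0 := g i (coord_line w i d s)) in *.
  set (f' := hinner (grad i (coord_line w i d s)) d) in *.
  assert (Hh0' : 0 < Rabs h) by (apply Rabs_pos_lt; auto).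
  replace ((f1 - f0) / h - f') with ((f1 - f0 - h * f') / h) by (field; auto).
  unfold Rdiv. rewrite Rabs_mult, Rabs_inv.
  apply (Rmult_lt_reg_r (Rabs h)); auto. rewrite Rmult_assoc, Rinv_l, Rmult_1_r by lra.
  eapply Rle_lt_trans; [exact Hd|].
  replace (e / (2 * (nd + 1)) * (Rabs h * nd)) with (Rabs h * (e * (nd / (2 * (nd + 1)))))
    by (field; lra).
  rewrite Rmult_comm. apply Rmult_lt_compat_r; auto.
  assert (nd / (2 * (nd + 1)) < 1).
  { apply (Rmult_lt_reg_r (2 * (nd + 1))); [lra|].
    unfold Rdiv. rewrite Rmult_assoc, Rinv_l by lra. lra. }
  assert (0 <= nd / (2 * (nd + 1))) by (apply Rmult_le_pos; [lra | left; apply Rinv_0_lt_compat; lra]).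
  nra.
Qed.

Lemma coord_line_monotone w i d s t :
  0 <= (s - t) * (hinner (grad i (coord_line w i d s)) d - hinner (grad i (coord_line w i d t)) d).
Proof.
  pose proof (grad_monotone (coord_line w i d s) (coord_line w i d t)) as Mo.
  change (hinner (hsub (pseudo_gradient (coord_line w i d s)) (pseudo_gradient (coord_line w i d t)))
                 (hsub (coord_line w i d s) (coord_line w i d t)) >= 0) in Mo.
  rewrite (pinner_single m H _ _ i) in Mo.
  - change (hinner (hsub (grad i (coord_line w i d s)) (grad i (coord_line w i d t)))
                   (hsub (coord_line w i d s i) (coord_line w i d t i)) >= 0) in Mo.
    unfold coord_line in *. rewrite !upd_same in Mo. revert Mo. inner_expand. nra.
  - intros j Hj. change (hsub (coord_line w i d s j) (coord_line w i d t j) = hzero).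
    unfold coord_line. rewrite !upd_other by auto. apply hsub_diag.
Qed.

Theorem solution_nash_equilibrium (w : PX m H) :
  solution (PX m H) C pseudo_gradient w -> forall i : idx m,
  Qset C i w (w i) /\ forall t : H i, Qset C i w t -> g i (upd w i (w i)) <= g i (upd w i t).
Proof.
  intros [Cw Hw] i. unfold Qset. rewrite upd_id. split; auto.
  intros t Ct. set (d := hsub t (w i)).
  assert (E0 : coord_line w i d 0 = w).
  { unfold coord_line. replace (hadd (w i) (hscal 0 d)) with (w i); [apply upd_id|].
    apply hilbert_ext; intro z. inner_expand. ring. }
  assert (E1 : coord_line w i d 1 = upd w i t).
  { unfold coord_line. f_equal. apply hilbert_ext; intro z. unfold d. inner_expand. ring. }
  rewrite <- E1, <- E0 at 1.
  apply (min_of_monotone_derivative _ _ (coord_line_derivative w i d)).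
  - intros s Hs. pose proof (coord_line_monotone w i d s 0). nra.
  - (* first-order condition: <grad_i w, t - w_i> >= 0 since upd w i t is in C *)
    specialize (Hw (upd w i t : PX m H) Ct). rewrite E0.
    rewrite hinner_sym, (pinner_single m H _ _ i) in Hw.
    + change (hinner (hopp (grad i w)) (hsub (upd w i t i) (w i)) <= 0) in Hw.
      rewrite upd_same, hinner_oppl in Hw. fold d in Hw. lra.
    + intros j Hj. change (hsub (upd w i t j) (w j) = hzero). rewrite upd_other by auto.
      apply hsub_diag.
Qed.
End NashEquilibrium.

Theorem proposition4p5
  (m : nat) (Hm : (2 <= m)%nat)
  (H : idx m -> Hilbert)
  (C : PH H -> Prop) (HCne : nonempty C) (HCcl : closed C) (HCcv : convex C)
  (g : forall i : idx m, PH H -> R)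
  (grad : forall i : idx m, PH H -> H i)
  (* for every x, t |-> g_i(x_1,..,t,..,x_m) is (Fréchet) differentiable at
     x_i with gradient grad_i x; since x ranges over all of PH, this is
     differentiability on all of H_i *)
  (Hdiff : forall (i : idx m) (x : PH H) (eps : R), eps > 0 ->
     exists delta, delta > 0 /\ forall h : H i, hnorm h < delta ->
       Rabs (g i (upd x i (hadd (x i) h)) - g i x - hinner (grad i x) h)
         <= eps * hnorm h)
  (Hmono : forall x y : PH H,
     sumI m (fun i => hinner (hsub (grad i x) (grad i y)) (hsub (x i) (y i))) >= 0)
  (P : PH H -> PH H) (HP : is_proj C P)
  (Hz : exists z : PH H, normal_cone C z (fun i => hopp (grad i z)))
  (chi : R) (Hchi : 0 < chi)
  (HLip : forall x y : PH H,
     sumI m (fun i => hnorm (hsub (grad i x) (grad i y)) ^ 2)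
       <= chi ^ 2 * sumI m (fun i => hnorm (hsub (x i) (y i)) ^ 2))
  (eps : R) (Heps : 0 < eps < 1 / (chi + 1))
  (gamma : nat -> R) (Hgamma : forall n, eps <= gamma n <= (1 - eps) / chi)
  (x0 : PH H)
  (a b c : forall i : idx m, nat -> H i)
  (Ha : forall i, abs_summable (a i))
  (Hb : forall i, abs_summable (b i))
  (Hc : forall i, abs_summable (c i))
  (x y p q : nat -> PH H)
  (Hx0 : forall i, x O i = x0 i)
  (Hy : forall n i, y n i = hsub (x n i) (hscal (gamma n) (hadd (grad i (x n)) (a i n))))
  (Hp : forall n i, p n i = hadd (P (y n) i) (b i n))
  (Hq : forall n i, q n i = hsub (p n i) (hscal (gamma n) (hadd (grad i (p n)) (c i n))))
  (Hx : forall n i, x (S n) i = hadd (hsub (x n i) (y n i)) (q n i)) :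
  exists xbar : PH H,
    (forall i : idx m,
       Qset C i xbar (xbar i) /\
       forall t : H i, Qset C i xbar t -> g i (upd xbar i (xbar i)) <= g i (upd xbar i t)) /\
    (forall i : idx m, weak_cv (fun n => x n i) (xbar i) /\ weak_cv (fun n => p n i) (xbar i)).
Proof.
  (* run the forward-backward-forward theorem in the product space with the
     pseudo-gradient, then read off the equilibrium and the coordinates;
     nonemptiness and closedness of C only serve the existence of P, which
     is assumed *)
  destruct (fbf_weak_convergence (PX m H) C HCcv (pseudo_gradient m H grad) chi Hchi Hmono
              (product_lipschitz m H _ chi Hchi HLip) P HP eps (proj1 Heps) gamma Hgamma
              _ _ _ (product_summable m H a Ha) (product_summable m H b Hb)
              (product_summable m H c Hc) x y p q
              (fun n => functional_extensionality_dep _ _ (Hy n))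
              (fun n => functional_extensionality_dep _ _ (Hp n))
              (fun n => functional_extensionality_dep _ _ (Hq n))
              (fun n => functional_extensionality_dep _ _ (Hx n)) Hz)
    as [w [Hw [Wx Wp]]].
  exists w. split.
  - apply (solution_nash_equilibrium m H C g grad Hdiff Hmono w Hw).
  - intros i. split; apply weak_cv_component; auto.
Qed.
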